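(* Assume Hypotheses 1, 2 and 3 (see context). For any $x\in\Gamma$ and each $\mathbf{z}\in\mathbb{R}^m$, the set $T(x)\cap\mathcal{I}(\mathbf{z})$ contains exactly one point.
   Context: System $\dot x=F(x)$ with $F=(f,g)$, i.e. $\dot a=f(a,z)$, $\dot z=g(a,z)$, $(a,z)\in\mathbb{R}^n\times\mathbb{R}^m$, $X=\mathbb{R}^n\times\mathbb{R}^m$, flow $\Phi(t,x)$. Euclidean inner product, norm, operator norm. $\mathcal{L}(x_1,x_2)=\|a_2-a_1\|^2-\|z_2-z_1\|^2$, $\mathcal{C}(x)=\{x'\in X:\mathcal{L}(x',x)\ge0\}$, $\mathbf{0}$ the zero vector of $X$; $\Pi(a,z)=a$, $\Pi_\perp(a,z)=z$; $\mathbb{B}_d(x)=\{(a',z'):\|a'-a\|\le d,\|z'-z\|\le d\}$. $\Gamma\subseteq U$ positively invariant means $\Phi(t,x)$ is defined for all $t\ge0$ for $x\in\Gamma$ and $\Phi(t,\Gamma)\subseteq\Gamma$. Hypothesis 1: $U$ open and convex, and there is $d>0$ with $\mathcal{C}(x)\cap U\subset\mathbb{B}_d(x)$ for all $x\in U$. Hypothesis 2: $f,g$ are $C^1$ on $U$; there exist continuous $\alpha>0$, $\ell\ge0$ on $U$ and $c_1>0$ with, for all $x\in U$: $\langle a',D_af(x)a'\rangle\ge\alpha(x)\|a'\|^2$; $\langle z',D_zg(x)z'\rangle\le\ell(x)\|z'\|^2$; $\alpha(x)\ge\ell(x)+\|D_zf(x)\|+\|D_ag(x)\|+c_1$. Hypothesis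 3: $\Gamma\subset U$ is positively invariant and $\Pi_\perp(\Gamma)=\Pi_\perp(U)$. For $x\in\Gamma$, $Q(t,x)$ ($t\ge0$) denotes the fundamental matrix solution of the variational equation $\dot{\mathbf{x}}=DF(\Phi(t,x))\mathbf{x}$ with $Q(0,x)=I$. For $x\in\Gamma$, $T(x):=\{\mathbf{x}\in X: \mathcal{L}(Q(t,x)\mathbf{x},\mathbf{0})\le0\text{ for all }t\ge0\}$. For $\mathbf{z}\in\mathbb{R}^m$, $\mathcal{I}(\mathbf{z}):=\{(\mathbf{a},\mathbf{z}):\mathbf{a}\in\mathbb{R}^n\}$. *)

(* Stdlib Reals.
   Vectors of R^k are modelled as functions nat -> R whose coordinates
   of index >= k vanish ("supp k v").  A point of X = R^n x R^m is a pair
   (a, z) of such vectors. *)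
From Stdlib Require Import Reals.
Open Scope R_scope.

Definition vec := nat -> R.
Definition pt : Type := (vec * vec)%type.

Definition supp (k : nat) (v : vec) : Prop := forall i, (k <= i)%nat -> v i = 0.

Fixpoint sumR (k : nat) (h : nat -> R) : R :=
  match k with O => 0 | S k' => sumR k' h + h k' end.

Definition dot (k : nat) (u v : vec) : R := sumR k (fun i => u i * v i).
Definition norm (k : nat) (v : vec) : R := sqrt (dot k v v).

Definition vzero : vec := fun _ => 0.
Definition vadd (u v : vec) : vec := fun i => u i + v i.
Definition vsub (u v : vec) : vec := fun i => u i - v i.
Definition vscal (c : R) (u : vec) : vec := fun i => c * u i.

Definition pzero : pt := (vzero, vzero).
Definition padd (p q : pt) : pt := (vadd (fst p) (fst q), vadd (snd p) (snd q)).
Definition psub (p q : pt) : pt := (vsub (fst p) (fst q), vsub (snd p) (snd q)).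
Definition pscal (c : R) (p : pt) : pt := (vscal c (fst p), vscal c (snd p)).

Definition inX (n m : nat) (p : pt) : Prop := supp n (fst p) /\ supp m (snd p).
Definition normX (n m : nat) (p : pt) : R :=
  sqrt (dot n (fst p) (fst p) + dot m (snd p) (snd p)).

Definition Lyap (n m : nat) (x1 x2 : pt) : R :=
  (norm n (vsub (fst x2) (fst x1)))^2 - (norm m (vsub (snd x2) (snd x1)))^2.

Definition cone (n m : nat) (x : pt) : pt -> Prop :=
  fun x' => inX n m x' /\ Lyap n m x' x >= 0.

Definition ball (n m : nat) (d : R) (x : pt) : pt -> Prop :=
  fun x' => inX n m x' /\ norm n (vsub (fst x') (fst x)) <= d
            /\ norm m (vsub (snd x') (snd x)) <= d.

Definition open_X (n m : nat) (U : pt -> Prop) : Prop :=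
  forall x, U x -> exists eps, 0 < eps /\
    forall y, inX n m y -> normX n m (psub y x) < eps -> U y.

Definition convex (U : pt -> Prop) : Prop :=
  forall x y t, U x -> U y -> 0 <= t <= 1 ->
    U (padd (pscal (1 - t) x) (pscal t y)).

Definition Hyp1 (n m : nat) (U : pt -> Prop) : Prop :=
  (forall x, U x -> inX n m x) /\ open_X n m U /\ convex U /\
  exists d, 0 < d /\
    forall x, U x -> forall x', cone n m x x' -> U x' -> ball n m d x x'.

Definition is_deriv (n m k : nat) (G : pt -> vec) (x : pt) (L : pt -> vec) : Prop :=
  (forall h, inX n m h -> supp k (L h)) /\
  (forall h1 h2, inX n m h1 -> inX n m h2 -> L (padd h1 h2) = vadd (L h1) (L h2)) /\
  (forall c h, inX n m h -> L (pscal c h) = vscal c (L h)) /\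
  (forall eps, 0 < eps -> exists delta, 0 < delta /\
     forall h, inX n m h -> normX n m h < delta ->
       norm k (vsub (vsub (G (padd x h)) (G x)) (L h)) <= eps * normX n m h).

Definition C1_on (n m k : nat) (U : pt -> Prop) (G : pt -> vec) (DG : pt -> pt -> vec) : Prop :=
  (forall x, U x -> supp k (G x)) /\
  (forall x, U x -> is_deriv n m k G x (DG x)) /\
  (forall x, U x -> forall eps, 0 < eps -> exists delta, 0 < delta /\
     forall y, U y -> normX n m (psub y x) < delta ->
       forall h, inX n m h -> norm k (vsub (DG y h) (DG x h)) <= eps * normX n m h).

Definition cont_on (n m : nat) (U : pt -> Prop) (r : pt -> R) : Prop :=
  forall x, U x -> forall eps, 0 < eps -> exists delta, 0 < delta /\
    forall y, U y -> normX n m (psub y x) < delta -> Rabs (r y - r x) < eps.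

Definition is_opnorm (p q : nat) (A : vec -> vec) (r : R) : Prop :=
  is_lub (fun y => exists v, supp p v /\ norm p v <= 1 /\ y = norm q (A v)) r.

(* Hypothesis 2; Df, Dg are the derivatives of f, g, so that
   D_a f(x) a' = Df x (a',0), D_z f(x) z' = Df x (0,z'), etc. *)
Definition Hyp2 (n m : nat) (U : pt -> Prop) (f g : pt -> vec) (Df Dg : pt -> pt -> vec) : Prop :=
  C1_on n m n U f Df /\ C1_on n m m U g Dg /\
  exists (alpha ell : pt -> R) (c1 : R),
    cont_on n m U alpha /\ cont_on n m U ell /\ 0 < c1 /\
    forall x, U x ->
      0 < alpha x /\ 0 <= ell x /\
      (forall a', supp n a' -> dot n a' (Df x (a', vzero)) >= alpha x * (norm n a')^2) /\
      (forall z', supp m z' -> dot m z' (Dg x (vzero, z')) <= ell x * (norm m z')^2) /\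
      exists r1 r2,
        is_opnorm m n (fun z' => Df x (vzero, z')) r1 /\
        is_opnorm n m (fun a' => Dg x (a', vzero)) r2 /\
        alpha x >= ell x + r1 + r2 + c1.

Definition deriv_nonneg (y : R -> R) (t dy : R) : Prop :=
  forall eps, 0 < eps -> exists delta, 0 < delta /\
    forall s, 0 <= s -> s <> t -> Rabs (s - t) < delta ->
      Rabs ((y s - y t) / (s - t) - dy) < eps.

(* phi(., x) is the forward solution of x' = F(x) = (f(x), g(x)) from x,
   defined for all t >= 0 and remaining in Gam (positive invariance). *)
Definition flow_inv (n m : nat) (Gam : pt -> Prop) (f g : pt -> vec)
  (phi : R -> pt -> pt) : Prop :=
  forall x, Gam x -> phi 0 x = x /\
    forall t, 0 <= t -> Gam (phi t x) /\
      (forall i, (i < n)%nat -> deriv_nonneg (fun s => fst (phi s x) i) t (f (phi t x) i)) /\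
      (forall i, (i < m)%nat -> deriv_nonneg (fun s => snd (phi s x) i) t (g (phi t x) i)).

Definition Hyp3 (n m : nat) (U Gam : pt -> Prop) (f g : pt -> vec) (phi : R -> pt -> pt) : Prop :=
  (forall x, Gam x -> U x) /\ flow_inv n m Gam f g phi /\
  (forall zz, (exists a, Gam (a, zz)) <-> (exists a, U (a, zz))).

(* Q t x v = Q(t,x) v : solution of the variational equation
   v' = DF(phi(t,x)) v with initial value v. *)
Definition fund_sol (n m : nat) (Gam : pt -> Prop) (Df Dg : pt -> pt -> vec)
  (phi : R -> pt -> pt) (Q : R -> pt -> pt -> pt) : Prop :=
  forall x, Gam x -> forall v, inX n m v -> Q 0 x v = v /\
    forall t, 0 <= t -> inX n m (Q t x v) /\
      (forall i, (i < n)%nat ->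
         deriv_nonneg (fun s => fst (Q s x v) i) t (Df (phi t x) (Q t x v) i)) /\
      (forall i, (i < m)%nat ->
         deriv_nonneg (fun s => snd (Q s x v) i) t (Dg (phi t x) (Q t x v) i)).

Definition Tset (n m : nat) (Q : R -> pt -> pt -> pt) (x : pt) : pt -> Prop :=
  fun v => inX n m v /\ forall t, 0 <= t -> Lyap n m (Q t x v) pzero <= 0.

Definition Ifib (n m : nat) (zz : vec) : pt -> Prop :=
  fun p => inX n m p /\ snd p = zz.

From Stdlib Require Import Reals Lra Lia Psatz FunctionalExtensionality Classical IndefiniteDescription.
Open Scope R_scope.

(** Along the trajectory of x the variational equation is a linear
    time-dependent system w' = (A t w, B t w) which, by Hypothesis 2, is a
    "cone system": A expands the a-direction on the positive cone at a rate
    mu, B expands the z-direction on the negative cone at a rate at most nu,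
    and mu >= nu + c1.  For such systems:
    - the positive cone is forward invariant (first-crossing argument), so the
      negative cone is backward invariant;
    - two solutions starting on the same fiber and staying in the negative
      cone up to time T start at a-distance O(1 / sqrt (1 + 2 c1 T))
      (squeezing);
    - for each horizon T the fiber contains a point staying in the negative
      cone up to T, because a |-> a-part of Q(T)(a,0) is an injective, hence
      surjective, linear map;
    - letting T -> oo these points converge, by squeezing, to the unique point
      of the fiber staying in the negative cone forever. *)

Lemma sumR_ext k f g : (forall i, (i < k)%nat -> f i = g i) -> sumR k f = sumR k g.
Proof. induction k; simpl; intros H; auto. rewrite IHk, H; auto; lia. Qed.

Lemma sumR_plus k f g : sumR k (fun i => f i + g i) = sumR k f + sumR k g.
Proof. induction k; simpl; [lra|]. rewrite IHk; lra. Qed.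

Lemma sumR_minus k f g : sumR k (fun i => f i - g i) = sumR k f - sumR k g.
Proof. induction k; simpl; [lra|]. rewrite IHk; lra. Qed.

Lemma sumR_scal k c f : sumR k (fun i => c * f i) = c * sumR k f.
Proof. induction k; simpl; [lra|]. rewrite IHk; lra. Qed.

Lemma sumR_le k f g : (forall i, (i < k)%nat -> f i <= g i) -> sumR k f <= sumR k g.
Proof.
  induction k; simpl; intros H; [lra|].
  assert (f k <= g k) by (apply H; lia).
  assert (sumR k f <= sumR k g) by (apply IHk; intros; apply H; lia). lra.
Qed.

Lemma sumR_zero k : sumR k (fun _ => 0) = 0.
Proof. induction k; simpl; auto. rewrite IHk; lra. Qed.

Lemma sumR_nonneg k f : (forall i, (i < k)%nat -> 0 <= f i) -> 0 <= sumR k f.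
Proof. intros H. rewrite <- (sumR_zero k). apply sumR_le; auto. Qed.

Lemma sumR_term_le k f j :
  (forall i, (i < k)%nat -> 0 <= f i) -> (j < k)%nat -> f j <= sumR k f.
Proof.
  induction k; simpl; intros H Hj; [lia|].
  assert (0 <= f k) by (apply H; lia).
  destruct (Nat.eq_dec j k) as [->|Hne].
  - assert (0 <= sumR k f) by (apply sumR_nonneg; intros; apply H; lia). lra.
  - assert (f j <= sumR k f) by (apply IHk; [intros; apply H|]; lia). lra.
Qed.

Lemma sumR_abs_le k f : Rabs (sumR k f) <= sumR k (fun i => Rabs (f i)).
Proof. induction k; simpl. rewrite Rabs_R0; lra. eapply Rle_trans. apply Rabs_triang. lra. Qed.

Lemma Rabs_mul_self x : Rabs x * Rabs x = x * x.
Proof. rewrite <- Rabs_mult. apply Rabs_right, Rle_ge, Rle_0_sqr. Qed.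

(** * Euclidean geometry of R^k *)

Definition nsq k v := dot k v v.

Lemma dot_sym k u v : dot k u v = dot k v u.
Proof. unfold dot. apply sumR_ext. intros; ring. Qed.

Lemma dot_add_r k u v w : dot k u (vadd v w) = dot k u v + dot k u w.
Proof. unfold dot, vadd. rewrite <- sumR_plus. apply sumR_ext; intros; ring. Qed.

Lemma dot_sub_r k u v w : dot k u (vsub v w) = dot k u v - dot k u w.
Proof. unfold dot, vsub. rewrite <- sumR_minus. apply sumR_ext; intros; ring. Qed.

Lemma dot_scal_r k u c v : dot k u (vscal c v) = c * dot k u v.
Proof. unfold dot, vscal. rewrite <- sumR_scal. apply sumR_ext; intros; ring. Qed.

Lemma dot_add_l k u v w : dot k (vadd v w) u = dot k v u + dot k w u.
Proof. rewrite !(dot_sym k _ u). apply dot_add_r. Qed.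

Lemma dot_sub_l k u v w : dot k (vsub v w) u = dot k v u - dot k w u.
Proof. rewrite !(dot_sym k _ u). apply dot_sub_r. Qed.

Lemma dot_scal_l k u c v : dot k (vscal c v) u = c * dot k v u.
Proof. rewrite !(dot_sym k _ u). apply dot_scal_r. Qed.

Lemma nsq_nonneg k v : 0 <= nsq k v.
Proof. unfold nsq, dot. apply sumR_nonneg. intros; nra. Qed.

Lemma nsq_add k u v : nsq k (vadd u v) = nsq k u + 2 * dot k u v + nsq k v.
Proof. unfold nsq. rewrite dot_add_l, !dot_add_r, (dot_sym k v u). ring. Qed.

Lemma nsq_sub k u v : nsq k (vsub u v) = nsq k u - 2 * dot k u v + nsq k v.
Proof. unfold nsq. rewrite dot_sub_l, !dot_sub_r, (dot_sym k v u). ring. Qed.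

Lemma nsq_scal k c v : nsq k (vscal c v) = c * c * nsq k v.
Proof. unfold nsq. rewrite dot_scal_l, dot_scal_r. ring. Qed.

Lemma nsq_zero_of k v : (forall i, (i < k)%nat -> v i = 0) -> nsq k v = 0.
Proof.
  intros H. unfold nsq, dot. rewrite <- (sumR_zero k). apply sumR_ext.
  intros i Hi. rewrite H; auto; ring.
Qed.

Lemma nsq_vzero k : nsq k vzero = 0.
Proof. apply nsq_zero_of. reflexivity. Qed.

Lemma nsq_self_sub k z : nsq k (vsub z z) = 0.
Proof. apply nsq_zero_of. intros; unfold vsub; ring. Qed.

Lemma coord_sq_le k v i : (i < k)%nat -> v i * v i <= nsq k v.
Proof. intros. apply (sumR_term_le k (fun i => v i * v i)); auto. intros; nra. Qed.

Lemma nsq_zero_coord k v : nsq k v = 0 -> forall i, (i < k)%nat -> v i = 0.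
Proof. intros E i Hi. pose proof (coord_sq_le k v i Hi). nra. Qed.

Lemma norm_nonneg k v : 0 <= norm k v.
Proof. apply sqrt_pos. Qed.

Lemma norm_sq k v : norm k v * norm k v = nsq k v.
Proof. apply sqrt_sqrt, nsq_nonneg. Qed.

Lemma norm_pow2 k v : norm k v ^ 2 = nsq k v.
Proof. rewrite <- norm_sq. ring. Qed.

Lemma norm_le_of_nsq k j u v : nsq j v <= nsq k u -> norm j v <= norm k u.
Proof. intros H. apply sqrt_le_1_alt. exact H. Qed.

Lemma norm_le_of k v y : 0 <= y -> nsq k v <= y * y -> norm k v <= y.
Proof.
  intros Hy H. unfold norm. rewrite <- (sqrt_square y) by auto.
  apply sqrt_le_1_alt. exact H.
Qed.

Lemma coord_abs_le k v i : (i < k)%nat -> Rabs (v i) <= norm k v.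
Proof.
  intros Hi. rewrite <- sqrt_Rsqr_abs. apply sqrt_le_1_alt.
  unfold Rsqr. apply coord_sq_le; auto.
Qed.

Lemma norm_scal k c v : norm k (vscal c v) = Rabs c * norm k v.
Proof.
  unfold norm. fold (nsq k (vscal c v)) (nsq k v). rewrite nsq_scal.
  rewrite sqrt_mult_alt by nra. rewrite <- (sqrt_Rsqr_abs c). reflexivity.
Qed.

Lemma norm_vzero k : norm k vzero = 0.
Proof. unfold norm. fold (nsq k vzero). rewrite nsq_vzero. apply sqrt_0. Qed.

Lemma cauchy_schwarz_sq k u v : dot k u v ^ 2 <= nsq k u * nsq k v.
Proof.
  (* the quadratic  l |-> |u - l v|^2  is nonnegative *)
  assert (Hq : forall l, 0 <= nsq k u - 2 * l * dot k u v + l * l * nsq k v).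
  { intros l. pose proof (nsq_nonneg k (vsub u (vscal l v))) as H.
    rewrite nsq_sub, nsq_scal, dot_scal_r in H. nra. }
  pose proof (nsq_nonneg k u). pose proof (nsq_nonneg k v).
  destruct (Req_dec (nsq k v) 0) as [E|E].
  - rewrite E. destruct (Req_dec (dot k u v) 0) as [E2|E2]; [rewrite E2; nra|].
    specialize (Hq ((nsq k u + 1) / (2 * dot k u v))). rewrite E in Hq.
    replace (nsq k u - 2 * ((nsq k u + 1) / (2 * dot k u v)) * dot k u v +
      (nsq k u + 1) / (2 * dot k u v) * ((nsq k u + 1) / (2 * dot k u v)) * 0)
      with (-1) in Hq by (field; auto). lra.
  - specialize (Hq (dot k u v / nsq k v)).
    replace (nsq k u - 2 * (dot k u v / nsq k v) * dot k u v
             + dot k u v / nsq k v * (dot k u v / nsq k v) * nsq k v)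
      with ((nsq k u * nsq k v - dot k u v ^ 2) / nsq k v) in Hq by (field; auto).
    assert (0 < nsq k v) by lra.
    apply Rmult_le_compat_r with (r := nsq k v) in Hq; [|lra].
    unfold Rdiv in Hq. rewrite Rmult_assoc, Rinv_l in Hq; lra.
Qed.

Lemma cauchy_schwarz k u v : Rabs (dot k u v) <= norm k u * norm k v.
Proof.
  pose proof (cauchy_schwarz_sq k u v). rewrite <- !norm_sq in H.
  pose proof (norm_nonneg k u); pose proof (norm_nonneg k v).
  assert (0 <= norm k u * norm k v) by nra.
  unfold Rabs; destruct (Rcase_abs (dot k u v)); nra.
Qed.

Lemma cauchy_schwarz_up k u v : dot k u v <= norm k u * norm k v.
Proof. pose proof (cauchy_schwarz k u v). pose proof (Rle_abs (dot k u v)). lra. Qed.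

Lemma cauchy_schwarz_low k u v : - (norm k u * norm k v) <= dot k u v.
Proof.
  pose proof (cauchy_schwarz k u v). pose proof (Rle_abs (- dot k u v)).
  rewrite Rabs_Ropp in H0. lra.
Qed.

Lemma norm_triangle k u v : norm k (vadd u v) <= norm k u + norm k v.
Proof.
  pose proof (norm_nonneg k u); pose proof (norm_nonneg k v).
  apply norm_le_of; [lra|].
  rewrite nsq_add, <- !norm_sq. pose proof (cauchy_schwarz_up k u v). nra.
Qed.

Lemma norm_sub_le k u v : norm k (vsub u v) <= norm k u + norm k v.
Proof.
  replace (vsub u v) with (vadd u (vscal (-1) v))
    by (apply functional_extensionality; intros; unfold vadd, vsub, vscal; ring).
  eapply Rle_trans. apply norm_triangle.
  rewrite norm_scal, (Rabs_left (-1)) by lra. lra.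
Qed.

(* squared norm on X, and the quadratic form of the cone field,
   [hcone p = L(p, 0)] *)
Definition psq n m (p : pt) := nsq n (fst p) + nsq m (snd p).
Definition hcone n m (p : pt) := nsq n (fst p) - nsq m (snd p).

Lemma psq_nonneg n m p : 0 <= psq n m p.
Proof. unfold psq. pose proof (nsq_nonneg n (fst p)); pose proof (nsq_nonneg m (snd p)); lra. Qed.

Lemma normX_sq n m p : normX n m p * normX n m p = psq n m p.
Proof. apply sqrt_sqrt, psq_nonneg. Qed.

Lemma normX_nonneg n m p : 0 <= normX n m p.
Proof. apply sqrt_pos. Qed.

Lemma norm_fst_le n m p : norm n (fst p) <= normX n m p.
Proof. apply sqrt_le_1_alt. pose proof (nsq_nonneg m (snd p)). unfold nsq in *. lra. Qed.

Lemma norm_snd_le n m p : norm m (snd p) <= normX n m p.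
Proof. apply sqrt_le_1_alt. pose proof (nsq_nonneg n (fst p)). unfold nsq in *. lra. Qed.

Lemma Lyap_zero n m p : Lyap n m p pzero = hcone n m p.
Proof.
  unfold Lyap, hcone. rewrite !norm_pow2. simpl.
  assert (E : forall k v, nsq k (vsub vzero v) = nsq k v).
  { intros k v. rewrite nsq_sub, nsq_vzero. unfold dot, vzero.
    rewrite (sumR_ext k _ (fun _ => 0)) by (intros; ring). rewrite sumR_zero. ring. }
  rewrite !E. reflexivity.
Qed.

Lemma supp_vzero k : supp k vzero.
Proof. intros i _. reflexivity. Qed.
Lemma supp_vadd k u v : supp k u -> supp k v -> supp k (vadd u v).
Proof. intros H1 H2 i Hi. unfold vadd. rewrite H1, H2; auto; ring. Qed.
Lemma supp_vsub k u v : supp k u -> supp k v -> supp k (vsub u v).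
Proof. intros H1 H2 i Hi. unfold vsub. rewrite H1, H2; auto; ring. Qed.
Lemma supp_vscal k c u : supp k u -> supp k (vscal c u).
Proof. intros H1 i Hi. unfold vscal. rewrite H1; auto; ring. Qed.

Lemma inX_padd n m p q : inX n m p -> inX n m q -> inX n m (padd p q).
Proof. intros [] []; split; simpl; apply supp_vadd; auto. Qed.
Lemma inX_psub n m p q : inX n m p -> inX n m q -> inX n m (psub p q).
Proof. intros [] []; split; simpl; apply supp_vsub; auto. Qed.
Lemma inX_pscal n m c p : inX n m p -> inX n m (pscal c p).
Proof. intros []; split; simpl; apply supp_vscal; auto. Qed.
Lemma inX_fst n m a : supp n a -> inX n m (a, vzero).
Proof. split; auto. apply supp_vzero. Qed.
Lemma inX_snd n m z : supp m z -> inX n m (vzero, z).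
Proof. split; auto. apply supp_vzero. Qed.

Lemma supp_ext k u v : supp k u -> supp k v ->
  (forall i, (i < k)%nat -> u i = v i) -> u = v.
Proof.
  intros Hu Hv H. apply functional_extensionality; intros i.
  destruct (Nat.lt_ge_cases i k); [apply H | rewrite Hu, Hv]; auto.
Qed.

Lemma pt_eq_of_psq n m p q : inX n m p -> inX n m q -> psq n m (psub p q) = 0 -> p = q.
Proof.
  intros [Hpa Hpz] [Hqa Hqz] E. unfold psq in E. simpl in E.
  pose proof (nsq_nonneg n (vsub (fst p) (fst q))) as Pa.
  pose proof (nsq_nonneg m (vsub (snd p) (snd q))) as Pz.
  destruct p as [pa pz], q as [qa qz]; simpl in *.
  f_equal; [apply (supp_ext n) | apply (supp_ext m)]; auto; intros i Hi.
  - pose proof (nsq_zero_coord n (vsub pa qa) ltac:(lra) i Hi) as H. unfold vsub in H. lra.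
  - pose proof (nsq_zero_coord m (vsub pz qz) ltac:(lra) i Hi) as H. unfold vsub in H. lra.
Qed.

Lemma pair_split a z : (a, z) = padd (a, vzero) (vzero, z).
Proof. unfold padd; simpl. f_equal; apply functional_extensionality; intros; unfold vadd, vzero; ring. Qed.
Lemma pair_fst_add a b : (vadd a b, vzero) = padd (a, vzero) (b, vzero).
Proof. unfold padd; simpl. f_equal. apply functional_extensionality; intros; unfold vadd, vzero; ring. Qed.
Lemma pair_fst_scal c a : (vscal c a, vzero) = pscal c (a, vzero).
Proof. unfold pscal; simpl. f_equal. apply functional_extensionality; intros; unfold vscal, vzero; ring. Qed.
Lemma pair_snd_add a b : (vzero, vadd a b) = padd (vzero, a) (vzero, b).
Proof. unfold padd; simpl. f_equal. apply functional_extensionality; intros; unfold vadd, vzero; ring. Qed.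
Lemma pair_snd_scal c a : (vzero, vscal c a) = pscal c (vzero, a).
Proof. unfold pscal; simpl. f_equal. apply functional_extensionality; intros; unfold vscal, vzero; ring. Qed.

Definition linmap n m k (L : pt -> vec) : Prop :=
  (forall h, inX n m h -> supp k (L h)) /\
  (forall h1 h2, inX n m h1 -> inX n m h2 -> L (padd h1 h2) = vadd (L h1) (L h2)) /\
  (forall c h, inX n m h -> L (pscal c h) = vscal c (L h)).

Lemma linmap_sub n m k L p q : linmap n m k L -> inX n m p -> inX n m q ->
  L (psub p q) = vsub (L p) (L q).
Proof.
  intros [_ [HA HM]] Hp Hq.
  replace (psub p q) with (padd p (pscal (-1) q)).
  - rewrite HA, HM by (auto using inX_pscal).
    apply functional_extensionality; intros; unfold vadd, vsub, vscal; ring.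
  - unfold psub, padd, pscal; simpl.
    f_equal; apply functional_extensionality; intros; unfold vadd, vsub, vscal; ring.
Qed.

Lemma linmap_split n m k L a z : linmap n m k L -> supp n a -> supp m z ->
  L (a, z) = vadd (L (a, vzero)) (L (vzero, z)).
Proof. intros [_ [HA _]] Ha Hz. rewrite pair_split at 1. apply HA; auto using inX_fst, inX_snd. Qed.

(** * Calculus of one-sided derivatives on [0, +oo)

    [deriv_nonneg y t d] is differentiability relative to [0, +oo).  Extending
    [y] affinely to the negative axis turns it into an ordinary derivative, so
    the rules of the standard library transfer. *)

Definition ext_affine (y : R -> R) (d : R) (s : R) : R :=
  if Rle_dec 0 s then y s else y 0 + d * s.

Lemma ext_affine_eq y d s : 0 <= s -> ext_affine y d s = y s.
Proof. intros. unfold ext_affine. destruct (Rle_dec 0 s); auto; lra. Qed.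

Lemma deriv_nonneg_ext y t d : 0 <= t -> deriv_nonneg y t d -> derivable_pt_lim (ext_affine y d) t d.
Proof.
  intros Ht H eps Heps. destruct (H eps Heps) as [del [Hdel Hs]].
  destruct (Req_dec t 0) as [->|E].
  - (* at the boundary the left quotient is exactly d *)
    exists (mkposreal del Hdel). intros h Hh Hlt. simpl in Hlt.
    unfold ext_affine. rewrite Rplus_0_l.
    destruct (Rle_dec 0 h); destruct (Rle_dec 0 0); try lra.
    + pose proof (Hs h r Hh). rewrite !Rminus_0_r in H0. auto.
    + replace ((y 0 + d * h - y 0) / h - d) with 0 by (field; auto). rewrite Rabs_R0; lra.
  - assert (Hm : 0 < Rmin del t) by (apply Rmin_pos; lra).
    exists (mkposreal _ Hm). intros h Hh Hlt. simpl in Hlt.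
    pose proof (Rmin_l del t); pose proof (Rmin_r del t). pose proof (Rle_abs (- h)).
    rewrite Rabs_Ropp in *.
    rewrite !ext_affine_eq by lra.
    replace h with ((t + h) - t) at 2 by ring. apply Hs; try lra.
    replace (t + h - t) with h by ring. lra.
Qed.

Lemma deriv_nonneg_of_lim g y t d : 0 <= t -> derivable_pt_lim g t d ->
  (forall s, 0 <= s -> g s = y s) -> deriv_nonneg y t d.
Proof.
  intros Ht H Hg eps Heps. destruct (H eps Heps) as [del Hdel].
  exists del. split; [apply cond_pos|]. intros s Hs Hne Hlt.
  assert (s - t <> 0) by lra. specialize (Hdel (s - t) H0 Hlt).
  replace (t + (s - t)) with s in Hdel by ring. rewrite <- !Hg; auto.
Qed.

Lemma deriv_nonneg_eq y1 y2 t d1 d2 : 0 <= t -> (forall s, 0 <= s -> y1 s = y2 s) -> d1 = d2 ->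
  deriv_nonneg y1 t d1 -> deriv_nonneg y2 t d2.
Proof.
  intros Ht E <- H eps Heps. destruct (H eps Heps) as [del [Hd Hs]].
  exists del; split; auto. intros s Hs0 Hne Hlt. rewrite <- !E; auto.
Qed.

Lemma deriv_nonneg_plus y1 y2 t d1 d2 : 0 <= t ->
  deriv_nonneg y1 t d1 -> deriv_nonneg y2 t d2 ->
  deriv_nonneg (fun s => y1 s + y2 s) t (d1 + d2).
Proof.
  intros Ht H1 H2. apply (deriv_nonneg_of_lim (fun s => ext_affine y1 d1 s + ext_affine y2 d2 s)); auto.
  - apply derivable_pt_lim_plus; apply deriv_nonneg_ext; auto.
  - intros; rewrite !ext_affine_eq; auto.
Qed.

Lemma deriv_nonneg_minus y1 y2 t d1 d2 : 0 <= t ->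
  deriv_nonneg y1 t d1 -> deriv_nonneg y2 t d2 ->
  deriv_nonneg (fun s => y1 s - y2 s) t (d1 - d2).
Proof.
  intros Ht H1 H2. apply (deriv_nonneg_of_lim (fun s => ext_affine y1 d1 s - ext_affine y2 d2 s)); auto.
  - apply derivable_pt_lim_minus; apply deriv_nonneg_ext; auto.
  - intros; rewrite !ext_affine_eq; auto.
Qed.

Lemma deriv_nonneg_mult y1 y2 t d1 d2 : 0 <= t ->
  deriv_nonneg y1 t d1 -> deriv_nonneg y2 t d2 ->
  deriv_nonneg (fun s => y1 s * y2 s) t (d1 * y2 t + y1 t * d2).
Proof.
  intros Ht H1 H2. apply (deriv_nonneg_of_lim (fun s => ext_affine y1 d1 s * ext_affine y2 d2 s)); auto.
  - rewrite <- (ext_affine_eq y2 d2 t), <- (ext_affine_eq y1 d1 t) by auto.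
    apply (derivable_pt_lim_mult (ext_affine y1 d1) (ext_affine y2 d2)); apply deriv_nonneg_ext; auto.
  - intros; rewrite !ext_affine_eq; auto.
Qed.

Lemma deriv_nonneg_scal c y t d : 0 <= t -> deriv_nonneg y t d ->
  deriv_nonneg (fun s => c * y s) t (c * d).
Proof.
  intros Ht H. apply (deriv_nonneg_of_lim (fun s => c * ext_affine y d s)); auto.
  - apply derivable_pt_lim_scal, deriv_nonneg_ext; auto.
  - intros; rewrite ext_affine_eq; auto.
Qed.

Lemma deriv_nonneg_const c t : 0 <= t -> deriv_nonneg (fun _ => c) t 0.
Proof. intros Ht. apply (deriv_nonneg_of_lim (fun _ => c)); auto. apply derivable_pt_lim_const. Qed.

Lemma deriv_nonneg_id t : 0 <= t -> deriv_nonneg (fun s => s) t 1.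
Proof. intros Ht. apply (deriv_nonneg_of_lim (fun s => s)); auto. apply derivable_pt_lim_id. Qed.

Lemma deriv_nonneg_exp c t : 0 <= t -> deriv_nonneg (fun s => exp (c * s)) t (c * exp (c * t)).
Proof.
  intros Ht. apply (deriv_nonneg_of_lim (fun s => exp (c * s))); auto.
  replace (c * exp (c * t)) with (exp (c * t) * (c * 1)) by ring.
  apply (derivable_pt_lim_comp (fun s => c * s) exp).
  - apply derivable_pt_lim_scal, derivable_pt_lim_id.
  - apply derivable_pt_lim_exp.
Qed.

Lemma deriv_nonneg_sumR k (F : R -> nat -> R) (dF : nat -> R) t : 0 <= t ->
  (forall i, (i < k)%nat -> deriv_nonneg (fun s => F s i) t (dF i)) ->
  deriv_nonneg (fun s => sumR k (F s)) t (sumR k dF).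
Proof.
  intros Ht. induction k; intros H; simpl.
  - apply deriv_nonneg_const; auto.
  - apply deriv_nonneg_plus; [auto | apply IHk; intros i Hi |]; apply H; lia.
Qed.

Lemma deriv_nonneg_shift y t d s0 : 0 <= s0 -> deriv_nonneg y (s0 + t) d ->
  deriv_nonneg (fun s => y (s0 + s)) t d.
Proof.
  intros H0 H eps Heps. destruct (H eps Heps) as [del [Hd Hs]]. exists del; split; auto.
  intros s Hs0 Hne Hlt. replace (s - t) with ((s0 + s) - (s0 + t)) by ring.
  apply Hs; try lra. replace (s0 + s - (s0 + t)) with (s - t) by ring; auto.
Qed.

Lemma deriv_nonneg_continuous y t d : 0 <= t -> deriv_nonneg y t d ->
  forall eps, 0 < eps -> exists del, 0 < del /\
    forall s, 0 <= s -> Rabs (s - t) < del -> Rabs (y s - y t) < eps.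
Proof.
  intros Ht H eps Heps.
  pose proof (derivable_continuous_pt _ _ (exist _ d (deriv_nonneg_ext y t d Ht H))) as C.
  destruct (C eps Heps) as [del [Hdel Hs]]. exists del. split; auto.
  intros s Hs0 Hlt. destruct (Req_dec s t) as [->|Hne].
  - rewrite Rminus_diag, Rabs_R0; auto.
  - specialize (Hs s (conj (conj I (not_eq_sym Hne)) Hlt)). simpl in Hs. unfold Rdist in Hs.
    rewrite !ext_affine_eq in Hs; auto.
Qed.

(** * Real induction on a compact interval and its consequences *)

Lemma real_induction T (Q : R -> Prop) : 0 <= T -> Q 0 ->
  (forall t, 0 < t <= T -> (forall s, 0 <= s < t -> Q s) -> Q t) ->
  (forall t, 0 <= t < T -> (forall s, 0 <= s <= t -> Q s) ->
     exists d, 0 < d /\ forall s, t < s < t + d -> s <= T -> Q s) ->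
  forall t, 0 <= t <= T -> Q t.
Proof.
  intros HT Q0 Hclosed Hopen.
  set (E := fun s => 0 <= s <= T /\ forall u, 0 <= u <= s -> Q u).
  assert (E0 : E 0) by (split; [lra | intros u Hu; replace u with 0 by lra; auto]).
  assert (Hb : bound E) by (exists T; intros s [Hs _]; lra).
  destruct (completeness E Hb (ex_intro _ 0 E0)) as [c [Hub Hlub]].
  assert (Hc0 : 0 <= c) by (apply Hub; auto).
  assert (HcT : c <= T) by (apply Hlub; intros s [Hs _]; lra).
  assert (Hbelow : forall u, 0 <= u < c -> Q u).
  { intros u Hu. apply NNPP; intros Hn. assert (c <= u); [|lra].
    apply Hlub. intros s [_ Es]. destruct (Rle_lt_dec s u); auto.
    exfalso. apply Hn, Es; lra. }
  assert (Hupto : forall u, 0 <= u <= c -> Q u).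
  { intros u Hu. destruct (Rlt_le_dec u c); [apply Hbelow; lra|].
    replace u with c by lra. destruct (Req_dec c 0) as [->|Hne]; auto.
    apply Hclosed; [lra | auto]. }
  destruct (Rlt_le_dec c T) as [HcT'|HcT'].
  - exfalso. destruct (Hopen c (conj Hc0 HcT') Hupto) as [d [Hd Hs]].
    pose proof (Rmin_l T (c + d / 2)). pose proof (Rmin_r T (c + d / 2)).
    set (s := Rmin T (c + d / 2)) in *.
    assert (c < s) by (apply Rmin_glb_lt; lra).
    assert (E s).
    { split; [lra|]. intros u Hu. destruct (Rle_lt_dec u c); [apply Hupto; lra|].
      apply Hs; lra. }
    pose proof (Hub s H2). lra.
  - intros t Ht. apply Hupto. lra.
Qed.

Lemma first_crossing T y dy : 0 <= T -> 0 < y 0 ->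
  (forall t, 0 <= t <= T -> deriv_nonneg y t (dy t)) ->
  (forall t, 0 <= t <= T -> y t = 0 -> 0 < dy t) ->
  forall t, 0 <= t <= T -> 0 < y t.
Proof.
  intros HT Hy0 Hd Hz. apply real_induction; auto.
  - intros t Ht Hbefore.
    assert (Hleft : forall del, 0 < del -> exists s, 0 <= s < t /\ Rabs (s - t) < del).
    { intros del Hdel. exists (t - Rmin del t / 2).
      pose proof (Rmin_l del t). pose proof (Rmin_r del t).
      assert (0 < Rmin del t) by (apply Rmin_pos; lra).
      split; [lra | rewrite Rabs_left; lra]. }
    destruct (Rlt_le_dec 0 (y t)) as [|Hle]; auto. exfalso.
    destruct (Req_dec (y t) 0) as [E|E].
    + (* at a zero the slope is positive, so y would be negative just before t *)
      pose proof (Hz t ltac:(lra) E) as Hdy.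
      destruct (Hd t ltac:(lra) (dy t / 2) ltac:(lra)) as [del [Hdel Hq]].
      destruct (Hleft del Hdel) as [s [Hs Hst]].
      specialize (Hq s ltac:(lra) ltac:(lra) Hst). pose proof (Hbefore s Hs).
      rewrite E in Hq. apply Rabs_def2 in Hq.
      assert (Hq' : (y s - 0) / (s - t) * (s - t) = y s) by (field; lra).
      nra.
    + (* by continuity y t would be close to the positive values before t *)
      destruct (deriv_nonneg_continuous y t (dy t) ltac:(lra) (Hd t ltac:(lra)) (- y t)
                  ltac:(lra)) as [del [Hdel Hc]].
      destruct (Hleft del Hdel) as [s [Hs Hst]].
      specialize (Hc s ltac:(lra) Hst). pose proof (Hbefore s Hs).
      apply Rabs_def2 in Hc. lra.
  - intros t Ht Hupto.
    destruct (deriv_nonneg_continuous y t (dy t) ltac:(lra) (Hd t ltac:(lra)) (y t)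
                (Hupto t ltac:(lra))) as [del [Hdel Hc]].
    exists del. split; auto. intros s Hs HsT.
    specialize (Hc s ltac:(lra) ltac:(rewrite Rabs_right; lra)). apply Rabs_def2 in Hc. lra.
Qed.

Lemma gronwall_upper T K y dy : 0 <= T -> 0 < K -> 0 <= y 0 ->
  (forall t, 0 <= t <= T -> deriv_nonneg y t (dy t) /\ dy t <= K * y t) ->
  forall t, 0 <= t <= T -> y t <= y 0 * exp (2 * K * t).
Proof.
  intros HT HK Hy0 H t Ht.
  (* y stays below every comparison function (y 0 + eta) exp (2 K s) *)
  assert (Hcmp : forall eta, 0 < eta -> y t < (y 0 + eta) * exp (2 * K * t)).
  { intros eta Heta.
    enough (0 < (y 0 + eta) * exp (2 * K * t) - y t) by lra.
    apply (first_crossing T (fun s => (y 0 + eta) * exp (2 * K * s) - y s)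
             (fun s => (y 0 + eta) * (2 * K * exp (2 * K * s)) - dy s)); auto.
    - rewrite Rmult_0_r, exp_0. lra.
    - intros s Hs. apply deriv_nonneg_minus; [lra | | apply H; auto].
      apply deriv_nonneg_scal; [lra|]. apply deriv_nonneg_exp; lra.
    - intros s Hs Z. destruct (H s Hs) as [_ Hdy].
      assert (0 < (y 0 + eta) * exp (2 * K * s)) by (apply Rmult_lt_0_compat; [lra | apply exp_pos]).
      nra. }
  apply le_epsilon. intros eps Heps.
  pose proof (exp_pos (2 * K * t)).
  specialize (Hcmp (eps / exp (2 * K * t)) ltac:(apply Rdiv_lt_0_compat; lra)).
  replace ((y 0 + eps / exp (2 * K * t)) * exp (2 * K * t)) with (y 0 * exp (2 * K * t) + eps)
    in Hcmp by (field; lra). lra.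
Qed.

Lemma gronwall_positive T K y dy : 0 <= T -> 0 < K -> 0 < y 0 ->
  (forall t, 0 <= t <= T -> deriv_nonneg y t (dy t) /\ - (K * y t) <= dy t) ->
  forall t, 0 <= t <= T -> 0 < y t.
Proof.
  intros HT HK Hy0 H t Ht.
  (* y stays above y 0 / 2 * exp (- 2 K s) *)
  enough (0 < y t - y 0 / 2 * exp (-2 * K * t)).
  { pose proof (exp_pos (-2 * K * t)). nra. }
  apply (first_crossing T (fun s => y s - y 0 / 2 * exp (-2 * K * s))
           (fun s => dy s - y 0 / 2 * (-2 * K * exp (-2 * K * s)))); auto.
  - rewrite Rmult_0_r, exp_0. lra.
  - intros s Hs. apply deriv_nonneg_minus; [lra | apply H; auto |].
    apply deriv_nonneg_scal; [lra|]. apply deriv_nonneg_exp; lra.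
  - intros s Hs Z. destruct (H s Hs) as [_ Hdy].
    assert (0 < y 0 / 2 * exp (-2 * K * s)) by (pose proof (exp_pos (-2 * K * s)); nra).
    nra.
Qed.

Lemma compact_uniform_bound T (P : R -> R -> Prop) : 0 <= T ->
  (forall t K K', P t K -> K <= K' -> P t K') ->
  (forall t0, 0 <= t0 <= T -> exists eta, 0 < eta /\
     exists K, forall t, 0 <= t <= T -> Rabs (t - t0) < eta -> P t K) ->
  exists K, forall t, 0 <= t <= T -> P t K.
Proof.
  intros HT Hmon Hloc.
  enough (HQ : forall t, 0 <= t <= T -> exists K, forall u, 0 <= u <= t -> P u K).
  { destruct (HQ T ltac:(lra)) as [K HK]. exists K. auto. }
  assert (Hmax : forall u K1 K2, P u K1 \/ P u K2 -> P u (Rmax K1 K2)).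
  { intros u K1 K2 [H|H]; eapply Hmon; eauto; [apply Rmax_l | apply Rmax_r]. }
  apply real_induction; auto.
  - destruct (Hloc 0 ltac:(lra)) as [eta [He [K HK]]]. exists K. intros u Hu.
    apply HK; [lra|]. replace (u - 0) with 0 by lra. rewrite Rabs_R0; auto.
  - intros t Ht Hbefore. destruct (Hloc t ltac:(lra)) as [eta [He [Kt HKt]]].
    set (s := Rmax 0 (t - eta / 2)).
    assert (Hs : 0 <= s < t) by (unfold s; unfold Rmax; destruct (Rle_dec 0 (t - eta / 2)); lra).
    assert (Hs' : t - eta / 2 <= s) by apply Rmax_r.
    destruct (Hbefore s Hs) as [Ks HKs]. exists (Rmax Ks Kt). intros u Hu. apply Hmax.
    destruct (Rle_lt_dec u s); [left; apply HKs; lra|].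
    right. apply HKt; [lra|]. apply Rabs_def1; lra.
  - intros t Ht Hupto. destruct (Hupto t ltac:(lra)) as [Ks HKs].
    destruct (Hloc t ltac:(lra)) as [eta [He [Kt HKt]]].
    exists eta. split; auto. intros s Hs HsT. exists (Rmax Ks Kt). intros u Hu. apply Hmax.
    destruct (Rle_lt_dec u t); [left; apply HKs; lra|].
    right. apply HKt; [lra|]. apply Rabs_def1; lra.
Qed.

(** * Finite-dimensional linear algebra *)

Definition evec (j : nat) : vec := fun i => if Nat.eqb i j then 1 else 0.
Definition trunc (N : nat) (c : nat -> R) : vec := fun i => if Nat.ltb i N then c i else 0.

Lemma supp_evec n j : (j < n)%nat -> supp n (evec j).
Proof. intros Hj i Hi. unfold evec. destruct (Nat.eqb_spec i j); auto; lia. Qed.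

Lemma supp_trunc n N c : (N <= n)%nat -> supp n (trunc N c).
Proof. intros HN i Hi. unfold trunc. destruct (Nat.ltb_spec i N); auto; lia. Qed.

Lemma trunc_supp n a : supp n a -> trunc n a = a.
Proof.
  intros Ha. apply functional_extensionality; intros j. unfold trunc.
  destruct (Nat.ltb_spec j n); auto. rewrite Ha; auto; lia.
Qed.

Section LinearExpansion.
Variable n : nat.
Variable Lm : vec -> vec.
Hypothesis Lm_add : forall a b, supp n a -> supp n b -> Lm (vadd a b) = vadd (Lm a) (Lm b).
Hypothesis Lm_scal : forall c a, supp n a -> Lm (vscal c a) = vscal c (Lm a).

Lemma lin_vzero i : Lm vzero i = 0.
Proof.
  replace vzero with (vscal 0 vzero) by (apply functional_extensionality; intros; unfold vscal, vzero; ring).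
  rewrite Lm_scal by apply supp_vzero. unfold vscal; ring.
Qed.

Lemma lin_expand a : supp n a -> forall r, Lm a r = sumR n (fun j => a j * Lm (evec j) r).
Proof.
  intros Ha r. rewrite <- (trunc_supp n a Ha) at 1.
  assert (H : forall N, (N <= n)%nat -> forall i, Lm (trunc N a) i = sumR N (fun j => a j * Lm (evec j) i)).
  { induction N; intros HN i.
    - simpl. replace (trunc 0 a) with vzero by (apply functional_extensionality; reflexivity).
      apply lin_vzero.
    - replace (trunc (S N) a) with (vadd (trunc N a) (vscal (a N) (evec N))).
      + rewrite Lm_add; [| apply supp_trunc; lia | apply supp_vscal, supp_evec; lia].
        unfold vadd. rewrite Lm_scal by (apply supp_evec; lia). unfold vscal.
        rewrite IHN by lia. simpl. ring.
      + apply functional_extensionality; intros j. unfold vadd, vscal, trunc, evec.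
        destruct (Nat.ltb_spec j N); destruct (Nat.ltb_spec j (S N)); destruct (Nat.eqb_spec j N);
          try lia; subst; ring. }
  apply H; lia.
Qed.

End LinearExpansion.

Definition skip (k j : nat) : nat := if Nat.ltb j k then j else S j.
Definition unskip (k j : nat) : nat := if Nat.ltb j k then j else pred j.

Lemma skip_ne k j : skip k j <> k.
Proof. unfold skip. destruct (Nat.ltb_spec j k); lia. Qed.

Lemma unskip_skip k j : unskip k (skip k j) = j.
Proof.
  unfold skip, unskip. destruct (Nat.ltb_spec j k).
  - destruct (Nat.ltb_spec j k); lia.
  - destruct (Nat.ltb_spec (S j) k); lia.
Qed.

Lemma skip_le k j N : (j <= N)%nat -> (skip k j <= S N)%nat.
Proof. unfold skip. destruct (Nat.ltb_spec j k); lia. Qed.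

Lemma sumR_skip N k F : (k <= N)%nat -> sumR (S N) F = F k + sumR N (fun j => F (skip k j)).
Proof.
  induction N; intros Hk.
  - assert (k = 0)%nat by lia. subst. simpl. ring.
  - change (sumR (S (S N)) F) with (sumR (S N) F + F (S N)).
    destruct (Nat.eq_dec k (S N)) as [->|Hne].
    + rewrite (sumR_ext (S N) (fun j => F (skip (S N) j)) F). ring.
      intros i Hi. unfold skip. destruct (Nat.ltb_spec i (S N)); auto; lia.
    + rewrite IHN by lia. simpl.
      replace (skip k N) with (S N) by (unfold skip; destruct (Nat.ltb_spec N k); lia). ring.
Qed.

(* Any N+1 vectors of R^N are linearly dependent (Gaussian elimination on the
   last coordinate). *)
Lemma dependent_family N : forall (w : nat -> vec),
  (forall j i, (j <= N)%nat -> (N <= i)%nat -> w j i = 0) ->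
  exists c : nat -> R, (exists j, (j <= N)%nat /\ c j <> 0) /\
    forall i, sumR (S N) (fun j => c j * w j i) = 0.
Proof.
  induction N; intros w Hw.
  - exists (fun _ => 1). split; [exists 0%nat; split; auto; lra|].
    intros i. simpl. rewrite (Hw 0%nat i) by lia. ring.
  - destruct (classic (exists k, (k <= S N)%nat /\ w k N <> 0)) as [[k [Hk Hwk]]|Hall].
    + (* eliminate the coordinate N using the pivot w k *)
      set (w' := fun j i => w (skip k j) i - (w (skip k j) N / w k N) * w k i).
      destruct (IHN w') as [c' [[j0 [Hj0 Hc0]] Hs]].
      { intros j i Hj Hi. unfold w'. destruct (Nat.eq_dec i N) as [->|Hne]; [field; auto|].
        rewrite (Hw (skip k j) i), (Hw k i) by (try apply skip_le; lia). ring. }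
      set (S0 := sumR (S N) (fun j' => c' j' * (w (skip k j') N / w k N))).
      exists (fun j => if Nat.eqb j k then - S0 else c' (unskip k j)). split.
      * exists (skip k j0). split; [apply skip_le; auto|].
        destruct (Nat.eqb_spec (skip k j0) k); [exfalso; apply (skip_ne k j0); auto|].
        rewrite unskip_skip. auto.
      * intros i. rewrite (sumR_skip (S N) k) by auto. rewrite Nat.eqb_refl.
        rewrite (sumR_ext (S N) _ (fun j => c' j * w (skip k j) i)).
        2:{ intros j Hj. destruct (Nat.eqb_spec (skip k j) k); [exfalso; apply (skip_ne k j); auto|].
            rewrite unskip_skip. auto. }
        specialize (Hs i). unfold w' in Hs.
        rewrite (sumR_ext (S N) _ (fun j => c' j * w (skip k j) i - w k i * (c' j * (w (skip k j) N / w k N))))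
          in Hs by (intros; ring).
        rewrite sumR_minus, sumR_scal in Hs. fold S0 in Hs. lra.
    + (* the coordinate N already vanishes: use the first N+1 vectors *)
      destruct (IHN w) as [c' [[j0 [Hj0 Hc0]] Hs]].
      { intros j i Hj Hi. destruct (Nat.eq_dec i N) as [->|Hne]; [|apply Hw; lia].
        apply NNPP; intros Hn. apply Hall. exists j; split; auto; lia. }
      exists (fun j => if Nat.leb j N then c' j else 0). split.
      * exists j0. split; [lia|]. destruct (Nat.leb_spec j0 N); auto; lia.
      * intros i. change (sumR (S (S N)) ?F) with (sumR (S N) F + F (S N)). cbv beta.
        destruct (Nat.leb_spec (S N) N); [lia|].
        rewrite (sumR_ext (S N) _ (fun j => c' j * w j i)), (Hs i); [ring|].
        intros j Hj. destruct (Nat.leb_spec j N); auto; lia.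
Qed.

Lemma injective_linear_surjective n (Lm : vec -> vec) :
  (forall a, supp n a -> supp n (Lm a)) ->
  (forall a b, supp n a -> supp n b -> Lm (vadd a b) = vadd (Lm a) (Lm b)) ->
  (forall c a, supp n a -> Lm (vscal c a) = vscal c (Lm a)) ->
  (forall a, supp n a -> (forall i, (i < n)%nat -> Lm a i = 0) -> forall i, (i < n)%nat -> a i = 0) ->
  forall y, supp n y -> exists a, supp n a /\ forall i, (i < n)%nat -> Lm a i = y i.
Proof.
  intros HS HA HM HI y Hy.
  assert (Hlin : forall c i, Lm (trunc n c) i = sumR n (fun j => c j * Lm (evec j) i)).
  { intros c i. rewrite (lin_expand n Lm HA HM) by (apply supp_trunc; lia).
    apply sumR_ext. intros j Hj. unfold trunc. destruct (Nat.ltb_spec j n); [auto | lia]. }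
  (* the n+1 vectors Lm e_0, ..., Lm e_(n-1), y are dependent *)
  destruct (dependent_family n (fun j i => if Nat.eqb j n then y i else Lm (evec j) i))
    as [c [[j0 [Hj0 Hc0]] Hs]].
  { intros j i Hj Hi. destruct (Nat.eqb_spec j n); [apply Hy; auto|].
    apply HS; [apply supp_evec; lia | auto]. }
  assert (Hs' : forall i, Lm (trunc n c) i + c n * y i = 0).
  { intros i. rewrite Hlin, <- (Hs i). simpl. rewrite Nat.eqb_refl. f_equal.
    apply sumR_ext. intros j Hj. destruct (Nat.eqb_spec j n); auto; lia. }
  destruct (Req_dec (c n) 0) as [E|E].
  - (* the coefficient of y cannot vanish, by injectivity *)
    exfalso. assert (Hk : forall i, (i < n)%nat -> trunc n c i = 0).
    { apply HI; [apply supp_trunc; lia|]. intros i Hi. specialize (Hs' i). rewrite E in Hs'. lra. }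
    destruct (Nat.eq_dec j0 n) as [->|Hne]; auto.
    apply Hc0. specialize (Hk j0 ltac:(lia)). unfold trunc in Hk.
    destruct (Nat.ltb_spec j0 n); auto; lia.
  - exists (vscal (- / c n) (trunc n c)). split; [apply supp_vscal, supp_trunc; lia|].
    intros i Hi. rewrite HM by (apply supp_trunc; lia). unfold vscal.
    specialize (Hs' i). replace (Lm (trunc n c) i) with (- (c n * y i)) by lra. field. auto.
Qed.

Lemma linmap_bounded n m k (L : pt -> vec) : linmap n m k L ->
  exists K0, 0 <= K0 /\ forall h, inX n m h -> norm k (L h) <= K0 * normX n m h.
Proof.
  intros HL. destruct HL as [LS [LA LM]].
  (* M r bounds the r-th coordinate of L on the unit ball *)
  set (M := fun r => sumR n (fun j => Rabs (L (evec j, vzero) r))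
                   + sumR m (fun j => Rabs (L (vzero, evec j) r))).
  assert (HM : forall r, 0 <= M r).
  { intros r. unfold M.
    pose proof (sumR_nonneg n (fun j => Rabs (L (evec j, vzero) r)) (fun i _ => Rabs_pos _)).
    pose proof (sumR_nonneg m (fun j => Rabs (L (vzero, evec j) r)) (fun i _ => Rabs_pos _)). lra. }
  exists (sqrt (sumR k (fun r => M r * M r))). split; [apply sqrt_pos|].
  intros [a z] [Ha Hz].
  assert (HLa : forall r, L (a, vzero) r = sumR n (fun j => a j * L (evec j, vzero) r)).
  { apply (lin_expand n (fun a => L (a, vzero))); auto.
    - intros u v Hu Hv. rewrite pair_fst_add. apply LA; apply inX_fst; auto.
    - intros c u Hu. rewrite pair_fst_scal. apply LM, inX_fst; auto. }
  assert (HLz : forall r, L (vzero, z) r = sumR m (fun j => z j * L (vzero, evec j) r)).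
  { apply (lin_expand m (fun z => L (vzero, z))); auto.
    - intros u v Hu Hv. rewrite pair_snd_add. apply LA; apply inX_snd; auto.
    - intros c u Hu. rewrite pair_snd_scal. apply LM, inX_snd; auto. }
  set (X := normX n m (a, z)).
  assert (HX : 0 <= X) by apply normX_nonneg.
  assert (Hcoord : forall r, Rabs (L (a, z) r) <= X * M r).
  { intros r. rewrite (linmap_split n m k L a z (conj LS (conj LA LM)) Ha Hz). unfold vadd.
    rewrite HLa, HLz. unfold M.
    eapply Rle_trans; [apply Rabs_triang|]. rewrite Rmult_plus_distr_l, <- !sumR_scal.
    apply Rplus_le_compat; (eapply Rle_trans; [apply sumR_abs_le|]); apply sumR_le;
      intros i Hi; rewrite Rabs_mult; apply Rmult_le_compat_r; try apply Rabs_pos.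
    - eapply Rle_trans; [apply coord_abs_le; eauto | apply (norm_fst_le n m (a, z))].
    - eapply Rle_trans; [apply coord_abs_le; eauto | apply (norm_snd_le n m (a, z))]. }
  set (S := sumR k (fun r => M r * M r)).
  assert (HS : sqrt S * sqrt S = S).
  { apply sqrt_sqrt, sumR_nonneg. intros r _. specialize (HM r). nra. }
  apply norm_le_of; [apply Rmult_le_pos; auto; apply sqrt_pos|].
  replace (sqrt S * X * (sqrt S * X)) with (X * X * (sqrt S * sqrt S)) by ring.
  rewrite HS.
  unfold S. rewrite <- sumR_scal. unfold nsq, dot. apply sumR_le. intros r Hr.
  specialize (Hcoord r). pose proof (Rabs_pos (L (a, z) r)).
  rewrite <- (Rabs_mul_self (L (a, z) r)).
  replace (X * X * (M r * M r)) with ((X * M r) * (X * M r)) by ring.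
  apply Rmult_le_compat; auto.
Qed.

Lemma opnorm_bound p q (Lf : vec -> vec) r :
  is_opnorm p q Lf r -> (forall c v, supp p v -> Lf (vscal c v) = vscal c (Lf v)) ->
  0 <= r /\ forall v, supp p v -> norm q (Lf v) <= r * norm p v.
Proof.
  intros [Hub _] HM.
  assert (H0 : Lf vzero = vzero).
  { apply functional_extensionality; intros i.
    replace vzero with (vscal 0 vzero) by (apply functional_extensionality; intros; unfold vscal, vzero; ring).
    rewrite HM by apply supp_vzero. unfold vscal, vzero; ring. }
  assert (Hr : 0 <= r).
  { rewrite <- (norm_vzero q), <- H0. apply Hub. exists vzero.
    split; [apply supp_vzero | split; [rewrite norm_vzero; lra | reflexivity]]. }
  split; auto. intros v Hv. pose proof (norm_nonneg p v).
  destruct (Req_dec (norm p v) 0) as [E|E].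
  - replace v with vzero.
    + rewrite H0, !norm_vzero. lra.
    + apply (supp_ext p); auto using supp_vzero. intros i Hi. symmetry.
      apply (nsq_zero_coord p); auto. rewrite <- norm_sq, E. ring.
  - (* normalize v to the unit sphere *)
    set (c := / norm p v).
    assert (Hc : 0 < c) by (unfold c; apply Rinv_0_lt_compat; lra).
    assert (Hu : norm q (Lf (vscal c v)) <= r).
    { apply Hub. exists (vscal c v). split; [apply supp_vscal; auto|]. split; [|reflexivity].
      rewrite norm_scal, Rabs_right by lra. unfold c. right. field. auto. }
    rewrite HM, norm_scal, Rabs_right in Hu by (auto; lra).
    unfold c in Hu. apply Rmult_le_compat_r with (r := norm p v) in Hu; auto.
    replace (/ norm p v * norm q (Lf v) * norm p v) with (norm q (Lf v)) in Hu by (field; auto). lra.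
Qed.

(** * Linear cone systems *)

Definition cone_system n m (A B : R -> pt -> vec) (c : R) : Prop :=
  (forall t, 0 <= t -> linmap n m n (A t) /\ linmap n m m (B t)) /\
  (forall t, 0 <= t -> exists mu nu, nu + c <= mu /\
     (forall a z, supp n a -> supp m z -> nsq m z <= nsq n a ->
        mu * nsq n a <= dot n a (A t (a, z))) /\
     (forall a z, supp n a -> supp m z -> nsq n a <= nsq m z ->
        dot m z (B t (a, z)) <= nu * nsq m z)) /\
  (forall T, 0 <= T -> exists K, 0 < K /\ forall t, 0 <= t <= T -> forall h, inX n m h ->
     norm n (A t h) <= K * normX n m h /\ norm m (B t h) <= K * normX n m h).

Definition sol n m (A B : R -> pt -> vec) (w : R -> pt) : Prop :=
  forall t, 0 <= t -> inX n m (w t) /\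
   (forall i, (i < n)%nat -> deriv_nonneg (fun s => fst (w s) i) t (A t (w t) i)) /\
   (forall i, (i < m)%nat -> deriv_nonneg (fun s => snd (w s) i) t (B t (w t) i)).

Lemma deriv_nonneg_nsq k (v : R -> vec) (dv : vec) t : 0 <= t ->
  (forall i, (i < k)%nat -> deriv_nonneg (fun s => v s i) t (dv i)) ->
  deriv_nonneg (fun s => nsq k (v s)) t (2 * dot k (v t) dv).
Proof.
  intros Ht H. apply (deriv_nonneg_eq (fun s => sumR k (fun i => v s i * v s i))
    _ _ (sumR k (fun i => dv i * v t i + v t i * dv i))); auto.
  - unfold dot. rewrite <- sumR_scal. apply sumR_ext; intros; ring.
  - apply deriv_nonneg_sumR; auto. intros i Hi.
    apply (deriv_nonneg_mult (fun s => v s i) (fun s => v s i)); auto.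
Qed.

Section ConeSystem.
Variables (n m : nat) (A B : R -> pt -> vec) (c : R).
Hypothesis Hsys : cone_system n m A B c.

Lemma sys_linear t : 0 <= t -> linmap n m n (A t) /\ linmap n m m (B t).
Proof. apply Hsys. Qed.

Lemma sol_add w1 w2 : sol n m A B w1 -> sol n m A B w2 -> sol n m A B (fun t => padd (w1 t) (w2 t)).
Proof.
  intros H1 H2 t Ht. destruct (H1 t Ht) as [X1 [D1 E1]], (H2 t Ht) as [X2 [D2 E2]].
  destruct (sys_linear t Ht) as [[_ [LA _]] [_ [LB _]]].
  split; [apply inX_padd; auto|]. simpl. rewrite LA, LB by auto.
  split; intros i Hi; apply deriv_nonneg_plus; auto.
Qed.

Lemma sol_scal a w : sol n m A B w -> sol n m A B (fun t => pscal a (w t)).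
Proof.
  intros H1 t Ht. destruct (H1 t Ht) as [X1 [D1 E1]].
  destruct (sys_linear t Ht) as [[_ [_ LA]] [_ [_ LB]]].
  split; [apply inX_pscal; auto|]. simpl. rewrite LA, LB by auto.
  split; intros i Hi; apply deriv_nonneg_scal; auto.
Qed.

Lemma sol_sub w1 w2 : sol n m A B w1 -> sol n m A B w2 -> sol n m A B (fun t => psub (w1 t) (w2 t)).
Proof.
  intros H1 H2 t Ht. destruct (H1 t Ht) as [X1 [D1 E1]], (H2 t Ht) as [X2 [D2 E2]].
  destruct (sys_linear t Ht) as [LA LB].
  split; [apply inX_psub; auto|]. simpl. rewrite (linmap_sub _ _ _ _ _ _ LA), (linmap_sub _ _ _ _ _ _ LB) by auto.
  split; intros i Hi; apply deriv_nonneg_minus; auto.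
Qed.

Lemma sol_deriv_fst w t : 0 <= t -> sol n m A B w ->
  deriv_nonneg (fun s => nsq n (fst (w s))) t (2 * dot n (fst (w t)) (A t (w t))).
Proof. intros Ht H. apply deriv_nonneg_nsq; auto. apply (H t Ht). Qed.

Lemma sol_deriv_snd w t : 0 <= t -> sol n m A B w ->
  deriv_nonneg (fun s => nsq m (snd (w s))) t (2 * dot m (snd (w t)) (B t (w t))).
Proof. intros Ht H. apply deriv_nonneg_nsq; auto. apply (H t Ht). Qed.

Definition dpsq w t := 2 * dot n (fst (w t)) (A t (w t)) + 2 * dot m (snd (w t)) (B t (w t)).

Lemma sol_deriv_psq w t : 0 <= t -> sol n m A B w ->
  deriv_nonneg (fun s => psq n m (w s)) t (dpsq w t).
Proof. intros Ht H. apply deriv_nonneg_plus; auto using sol_deriv_fst, sol_deriv_snd. Qed.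

Lemma dpsq_bound T : 0 <= T -> exists K, 0 < K /\ forall w, sol n m A B w ->
  forall t, 0 <= t <= T -> Rabs (dpsq w t) <= 4 * K * psq n m (w t).
Proof.
  intros HT. destruct Hsys as [_ [_ Hb]]. destruct (Hb T HT) as [K [HK HKb]].
  exists K; split; auto. intros w Hs t Ht.
  destruct (Hs t ltac:(lra)) as [X _]. destruct (HKb t Ht (w t) X) as [B1 B2].
  pose proof (cauchy_schwarz n (fst (w t)) (A t (w t))).
  pose proof (cauchy_schwarz m (snd (w t)) (B t (w t))).
  pose proof (norm_fst_le n m (w t)). pose proof (norm_snd_le n m (w t)).
  pose proof (normX_sq n m (w t)). pose proof (normX_nonneg n m (w t)).
  pose proof (norm_nonneg n (fst (w t))). pose proof (norm_nonneg m (snd (w t))).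
  pose proof (norm_nonneg n (A t (w t))). pose proof (norm_nonneg m (B t (w t))).
  unfold dpsq. eapply Rle_trans; [apply Rabs_triang|]. rewrite !Rabs_mult, Rabs_right by lra.
  set (X1 := normX n m (w t)) in *.
  assert (norm n (fst (w t)) * norm n (A t (w t)) <= X1 * (K * X1)) by (apply Rmult_le_compat; auto).
  assert (norm m (snd (w t)) * norm m (B t (w t)) <= X1 * (K * X1)) by (apply Rmult_le_compat; auto).
  nra.
Qed.

Lemma sol_growth T : 0 <= T -> exists K, 0 < K /\ forall w, sol n m A B w ->
  forall t, 0 <= t <= T -> psq n m (w t) <= psq n m (w 0) * exp (2 * K * t).
Proof.
  intros HT. destruct (dpsq_bound T HT) as [K [HK Hb]]. exists (4 * K). split; [lra|].
  intros w Hs. apply (gronwall_upper T (4 * K) (fun s => psq n m (w s)) (dpsq w)); auto; [lra | apply psq_nonneg|].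
  intros t Ht. split; [apply sol_deriv_psq; auto; lra|].
  specialize (Hb w Hs t Ht). pose proof (Rle_abs (dpsq w t)). lra.
Qed.

Lemma sol_unique w1 w2 : sol n m A B w1 -> sol n m A B w2 -> w1 0 = w2 0 ->
  forall t, 0 <= t -> w1 t = w2 t.
Proof.
  intros S1 S2 E t Ht. pose proof (sol_sub w1 w2 S1 S2) as Sw.
  destruct (sol_growth t Ht) as [K [HK Hg]].
  specialize (Hg _ Sw t ltac:(lra)). cbv beta in Hg.
  rewrite E in Hg. unfold psq at 2 in Hg. simpl in Hg. rewrite !nsq_self_sub in Hg.
  apply (pt_eq_of_psq n m); [apply S1 | apply S2 | ]; auto.
  pose proof (psq_nonneg n m (psub (w1 t) (w2 t))). lra.
Qed.

Lemma sol_nonvanishing w : sol n m A B w -> 0 < psq n m (w 0) -> forall t, 0 <= t -> 0 < psq n m (w t).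
Proof.
  intros Hs H0 t Ht. destruct (dpsq_bound t Ht) as [K [HK Hb]].
  apply (gronwall_positive t (4 * K) (fun s => psq n m (w s)) (dpsq w)); auto; [lra| |lra].
  intros s Hs'. split; [apply sol_deriv_psq; auto; lra|].
  specialize (Hb w Hs s Hs'). pose proof (Rle_abs (- dpsq w s)). rewrite Rabs_Ropp in *. lra.
Qed.

Definition dhcone w t := 2 * dot n (fst (w t)) (A t (w t)) - 2 * dot m (snd (w t)) (B t (w t)).

Lemma sol_deriv_hcone w t : 0 <= t -> sol n m A B w ->
  deriv_nonneg (fun s => hcone n m (w s)) t (dhcone w t).
Proof. intros Ht H. apply deriv_nonneg_minus; auto using sol_deriv_fst, sol_deriv_snd. Qed.

Hypothesis Hc : 0 < c.

(* Invariance of the positive cone {|z| < |a|}: on its boundary |a| = |z|,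
   the cone function grows at rate at least 2 c |a|^2 > 0. *)
Lemma cone_invariant w : sol n m A B w -> 0 < hcone n m (w 0) -> forall t, 0 <= t -> 0 < hcone n m (w t).
Proof.
  intros Hs H0 T HT.
  assert (Hnz : forall t, 0 <= t -> 0 < psq n m (w t)).
  { apply sol_nonvanishing; auto. unfold psq, hcone in *. pose proof (nsq_nonneg m (snd (w 0))). lra. }
  apply (first_crossing T (fun s => hcone n m (w s)) (dhcone w)); [lra | exact H0 | | | lra].
  - intros t Ht. apply sol_deriv_hcone; auto; lra.
  - intros t Ht Z. destruct Hsys as [_ [Hcone _]].
    destruct (Hcone t ltac:(lra)) as [mu [nu [Hmn [HA HB]]]].
    destruct (Hs t ltac:(lra)) as [[Xa Xz] _].
    specialize (Hnz t ltac:(lra)). unfold hcone, psq in Z, Hnz.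
    destruct (w t) as [a z] eqn:Ew. simpl in *.
    specialize (HA a z Xa Xz ltac:(lra)). specialize (HB a z Xa Xz ltac:(lra)).
    unfold dhcone. rewrite Ew. simpl.
    assert (0 < c * nsq n a) by (apply Rmult_lt_0_compat; lra). nra.
Qed.

End ConeSystem.

Lemma cone_system_shift n m A B c s0 : 0 <= s0 -> cone_system n m A B c ->
  cone_system n m (fun t => A (s0 + t)) (fun t => B (s0 + t)) c.
Proof.
  intros Hs0 [HL [HC HB]]. split; [|split].
  - intros t Ht. apply HL. lra.
  - intros t Ht. apply HC. lra.
  - intros T HT. destruct (HB (s0 + T) ltac:(lra)) as [K [HK Hb]].
    exists K. split; auto. intros t Ht. apply Hb. lra.
Qed.

Lemma sol_shift n m A B w s0 : 0 <= s0 -> sol n m A B w ->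
  sol n m (fun t => A (s0 + t)) (fun t => B (s0 + t)) (fun t => w (s0 + t)).
Proof.
  intros Hs0 H t Ht. destruct (H (s0 + t) ltac:(lra)) as [X [D1 D2]].
  split; auto. split; intros i Hi; apply (deriv_nonneg_shift (fun s => _ (w s) i)); auto.
Qed.

Lemma cone_backward n m A B c : cone_system n m A B c -> 0 < c ->
  forall u, sol n m A B u -> forall t, 0 <= t -> hcone n m (u t) <= 0 ->
  forall s, 0 <= s <= t -> hcone n m (u s) <= 0.
Proof.
  intros Hsys Hc u Hs t Ht H s Hst. apply Rnot_lt_le. intros Hpos.
  pose proof (cone_invariant n m _ _ c (cone_system_shift n m A B c s ltac:(lra) Hsys) Hc
                (fun r => u (s + r)) (sol_shift n m A B u s ltac:(lra) Hs)) as Inv.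
  cbv beta in Inv. rewrite Rplus_0_r in Inv. specialize (Inv Hpos (t - s) ltac:(lra)).
  replace (s + (t - s)) with t in Inv by ring. lra.
Qed.

Lemma negative_cone_fst_diff n m p q : hcone n m p <= 0 -> hcone n m q <= 0 ->
  nsq n (vsub (fst p) (fst q)) <= 2 * (nsq m (snd p) + nsq m (snd q)).
Proof.
  intros Hp Hq. unfold hcone in *.
  rewrite <- !norm_sq.
  pose proof (norm_sub_le n (fst p) (fst q)).
  pose proof (norm_le_of_nsq m n (snd p) (fst p) ltac:(lra)).
  pose proof (norm_le_of_nsq m n (snd q) (fst q) ltac:(lra)).
  pose proof (norm_nonneg n (vsub (fst p) (fst q))).
  pose proof (norm_nonneg m (snd p)). pose proof (norm_nonneg m (snd q)).
  set (N := norm n (vsub (fst p) (fst q))) in *.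
  set (z1 := norm m (snd p)) in *. set (z2 := norm m (snd q)) in *.
  assert (N <= z1 + z2) by (pose proof (norm_nonneg n (fst p)); lra).
  assert (N * N <= (z1 + z2) * (z1 + z2)) by (apply Rmult_le_compat; lra).
  pose proof (Rle_0_sqr (z1 - z2)). unfold Rsqr in *. lra.
Qed.

Section Squeezing.
Variables (n m : nat) (A B : R -> pt -> vec) (c : R).
Hypothesis Hsys : cone_system n m A B c.
Hypothesis Hc : 0 < c.

Variables (u1 u2 : R -> pt) (T : R).
Hypothesis S1 : sol n m A B u1.
Hypothesis S2 : sol n m A B u2.
Hypothesis HT : 0 <= T.
Hypothesis Hneg : forall t, 0 <= t <= T -> hcone n m (u1 t) <= 0 /\ hcone n m (u2 t) <= 0.
Hypothesis Ez : snd (u1 0) = snd (u2 0).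

Let w := fun s => psub (u1 s) (u2 s).
Let dA := fun s => nsq n (fst (w s)).
Let D := fun s => nsq m (snd (u1 s)) + nsq m (snd (u2 s)).

Lemma squeeze_D_nonneg s : 0 <= D s.
Proof. unfold D. pose proof (nsq_nonneg m (snd (u1 s))). pose proof (nsq_nonneg m (snd (u2 s))). lra. Qed.

(* Comparison: dA grows at rate at least 2 mu (w lies in the positive cone)
   while D grows at rate at most 2 nu <= 2 (mu - c), so a lower bound
   dA > R0 D at time 0 improves linearly in time. *)
Lemma squeeze_comparison R0 : 0 < R0 -> R0 * D 0 < dA 0 ->
  forall t, 0 <= t <= T -> R0 * (1 + 2 * c * t) * D t < dA t.
Proof.
  intros HR0 H0.
  assert (Sw : sol n m A B w) by (apply (sol_sub n m A B c Hsys); auto).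
  assert (Hwpos : forall t, 0 <= t -> 0 < hcone n m (w t)).
  { apply (cone_invariant n m A B c); auto. pose proof (squeeze_D_nonneg 0).
    unfold hcone, w. simpl. rewrite Ez, nsq_self_sub. unfold dA, w in H0. simpl in H0. nra. }
  set (rho := fun s => R0 * (1 + 2 * c * s)).
  set (dD := fun t => 2 * dot m (snd (u1 t)) (B t (u1 t)) + 2 * dot m (snd (u2 t)) (B t (u2 t))).
  intros t Ht. enough (0 < dA t - rho t * D t) by (unfold rho in *; lra). revert t Ht.
  apply (first_crossing T _ (fun t => 2 * dot n (fst (w t)) (A t (w t))
                                       - (R0 * (0 + 2 * c * 1) * D t + rho t * dD t))); auto.
  - unfold rho. lra.
  - intros t Ht. apply deriv_nonneg_minus; [lra | apply (sol_deriv_fst n m A B); auto; lra |].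
    apply (deriv_nonneg_mult rho D); [lra | | ].
    + apply deriv_nonneg_scal; [lra|]. apply deriv_nonneg_plus; [lra | apply deriv_nonneg_const; lra |].
      apply deriv_nonneg_scal; [lra|]. apply deriv_nonneg_id; lra.
    + apply deriv_nonneg_plus; [lra | |]; apply (sol_deriv_snd n m A B); auto; lra.
  - intros t Ht Z.
    destruct Hsys as [_ [Hcone _]]. destruct (Hcone t ltac:(lra)) as [mu [nu [Hmn [HA HB]]]].
    destruct (Sw t ltac:(lra)) as [[Xa Xz] _].
    destruct (S1 t ltac:(lra)) as [[X1a X1z] _], (S2 t ltac:(lra)) as [[X2a X2z] _].
    destruct (Hneg t Ht) as [N1 N2].
    pose proof (Hwpos t ltac:(lra)) as P. unfold hcone in N1, N2, P.
    pose proof (HA _ _ Xa Xz ltac:(lra)) as Q. rewrite <- surjective_pairing in Q.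
    pose proof (HB _ _ X1a X1z ltac:(lra)) as B1. pose proof (HB _ _ X2a X2z ltac:(lra)) as B2.
    rewrite <- surjective_pairing in B1, B2.
    assert (HdD : dD t <= 2 * nu * D t) by (unfold dD, D; lra).
    assert (Ht0 : 0 < t).
    { destruct (Req_dec t 0) as [->|]; [|lra]. exfalso.
      unfold rho in Z. replace (1 + 2 * c * 0) with 1 in Z by ring. nra. }
    assert (Hrho : R0 < rho t).
    { assert (0 < R0 * (c * t)) by (apply Rmult_lt_0_compat; [|apply Rmult_lt_0_compat]; lra).
      unfold rho. nra. }
    assert (HDt : 0 < D t).
    { assert (0 < rho t * D t) by (pose proof (nsq_nonneg m (snd (w t))); unfold dA in Z; simpl in *; lra).
      pose proof (squeeze_D_nonneg t). nra. }
    assert (Hmu : rho t * c <= rho t * (mu - nu)) by (apply Rmult_le_compat_l; lra).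
    assert (rho t * dD t <= rho t * (2 * nu * D t)) by (apply Rmult_le_compat_l; lra).
    assert (0 < c * (rho t - R0) * D t) by (apply Rmult_lt_0_compat; [apply Rmult_lt_0_compat|]; lra).
    unfold dA in Z. replace (nsq n (fst (w t))) with (rho t * D t) in Q by lra.
    nra.
Qed.

Lemma cone_squeeze : dA 0 * (1 + 2 * c * T) <= 4 * (2 * nsq m (snd (u1 0)) + 1).
Proof.
  pose proof (nsq_nonneg m (snd (u1 0))) as Hz0.
  assert (HD0 : D 0 = 2 * nsq m (snd (u1 0))) by (unfold D; rewrite Ez; ring).
  destruct (Req_dec (dA 0) 0) as [EA|NA]; [rewrite EA; lra|].
  assert (HA0 : 0 < dA 0) by (pose proof (nsq_nonneg n (fst (w 0))); unfold dA in *; lra).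
  set (R0 := dA 0 / (2 * (D 0 + 1))).
  assert (HR0eq : R0 * (2 * (D 0 + 1)) = dA 0) by (unfold R0; field; lra).
  assert (HR0 : 0 < R0) by (unfold R0; apply Rdiv_lt_0_compat; lra).
  pose proof (squeeze_comparison R0 HR0 ltac:(nra) T ltac:(lra)) as HcmpT.
  (* at time T: rho T * D T < dA T <= 2 D T, hence rho T < 2 *)
  destruct (Hneg T ltac:(lra)) as [N1 N2].
  pose proof (negative_cone_fst_diff n m _ _ N1 N2) as Hdiff. change (dA T <= 2 * D T) in Hdiff.
  assert (HDT : 0 < D T).
  { pose proof (squeeze_D_nonneg T).
    destruct (Req_dec (D T) 0) as [E|]; [rewrite E in HcmpT, Hdiff; lra | lra]. }
  assert (Hr : R0 * (1 + 2 * c * T) < 2) by (apply (Rmult_lt_reg_r (D T)); lra).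
  replace (dA 0 * (1 + 2 * c * T)) with (R0 * (1 + 2 * c * T) * (2 * (D 0 + 1))) by (rewrite <- HR0eq; ring).
  rewrite HD0. nra.
Qed.

End Squeezing.

Lemma nsq_cv k (u : nat -> vec) (l : vec) :
  (forall i, (i < k)%nat -> Un_cv (fun j => u j i) (l i)) ->
  Un_cv (fun j => nsq k (u j)) (nsq k l).
Proof.
  induction k; intros H.
  - unfold nsq, dot. simpl. intros eps Heps. exists 0%nat. intros. unfold Rdist. rewrite Rminus_diag, Rabs_R0. lra.
  - unfold nsq, dot. simpl. apply CV_plus; [apply IHk; auto | apply CV_mult]; apply H; lia.
Qed.

Lemma cv_squeeze_zero (u v : nat -> R) : (forall j, 0 <= u j <= v j) -> Un_cv v 0 -> Un_cv u 0.
Proof.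
  intros Hle Hv eps Heps. destruct (Hv eps Heps) as [N HN]. exists N. intros j Hj.
  specialize (HN j Hj). specialize (Hle j). unfold Rdist in *. rewrite Rminus_0_r in *.
  rewrite Rabs_right in * by lra. lra.
Qed.

Lemma cv_zero_of_sq (u v : nat -> R) : (forall j, u j * u j <= v j) -> Un_cv v 0 -> Un_cv u 0.
Proof.
  intros Hle Hv eps Heps. destruct (Hv (eps * eps) ltac:(nra)) as [N HN].
  exists N. intros j Hj. specialize (HN j Hj). specialize (Hle j). unfold Rdist in *.
  rewrite Rminus_0_r in *. apply Rabs_def2 in HN. destruct HN as [HN _].
  pose proof (Rabs_pos (u j)).
  destruct (Rlt_le_dec (Rabs (u j)) eps) as [|Hge]; auto.
  assert (eps * eps <= Rabs (u j) * Rabs (u j)) by (apply Rmult_le_compat; lra).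
  rewrite Rabs_mul_self in H0. lra.
Qed.

Lemma coord_cv_of_nsq k (u : nat -> vec) (l : vec) :
  Un_cv (fun j => nsq k (vsub (u j) l)) 0 -> forall i, (i < k)%nat -> Un_cv (fun j => u j i) (l i).
Proof.
  intros H i Hi.
  assert (H0 : Un_cv (fun j => u j i - l i) 0).
  { apply (cv_zero_of_sq _ _ (fun j => coord_sq_le k (vsub (u j) l) i Hi) H). }
  intros eps Heps. destruct (H0 eps Heps) as [N HN]. exists N. intros j Hj.
  specialize (HN j Hj). unfold Rdist in *. rewrite Rminus_0_r in HN. auto.
Qed.

Lemma cv_nonpos (u : nat -> R) l : (exists N, forall j, (N <= j)%nat -> u j <= 0) ->
  Un_cv u l -> l <= 0.
Proof.
  intros [N HN] Hu. apply Rnot_lt_le. intros Hl.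
  destruct (Hu l Hl) as [N' HN']. specialize (HN (max N N') ltac:(lia)).
  specialize (HN' (max N N') ltac:(lia)). unfold Rdist in HN'. apply Rabs_def2 in HN'. lra.
Qed.

Lemma cauchy_of_sq_bound (u : nat -> R) c C : 0 < c ->
  (forall N j k, (N <= j)%nat -> (N <= k)%nat -> (u j - u k) * (u j - u k) * (1 + 2 * c * INR N) <= C) ->
  Cauchy_crit u.
Proof.
  intros Hc H eps Heps.
  destruct (INR_unbounded (C / (2 * c * (eps * eps)))) as [N HN].
  exists N. intros j k Hj Hk. unfold Rdist. specialize (H N j k Hj Hk).
  pose proof (pos_INR N).
  assert (Hce : 0 < 2 * c * (eps * eps)) by (apply Rmult_lt_0_compat; nra).
  assert (HC : C < 2 * c * INR N * (eps * eps)).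
  { apply (Rmult_lt_compat_r (2 * c * (eps * eps))) in HN; auto.
    replace (C / (2 * c * (eps * eps)) * (2 * c * (eps * eps))) with C in HN by (field; nra). nra. }
  destruct (Rlt_le_dec (Rabs (u j - u k)) eps) as [|Hge]; auto. exfalso.
  assert (eps * eps <= (u j - u k) * (u j - u k)).
  { pose proof (Rabs_pos (u j - u k)). rewrite <- (Rabs_mul_self (u j - u k)). apply Rmult_le_compat; lra. }
  assert (0 <= 2 * c * INR N) by nra.
  nra.
Qed.

(** * The negative cone meets each fiber in exactly one point *)

Definition fundamental n m (A B : R -> pt -> vec) (F : R -> pt -> pt) : Prop :=
  forall v, inX n m v -> F 0 v = v /\ sol n m A B (fun t => F t v).

Definition neg_upto n m (F : R -> pt -> pt) (T : R) (p : pt) : Prop :=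
  forall s, 0 <= s <= T -> hcone n m (F s p) <= 0.

Lemma neg_upto_mono n m F T T' p : T' <= T -> neg_upto n m F T p -> neg_upto n m F T' p.
Proof. intros HT H s Hs. apply H. lra. Qed.

Section Fiber.
Variables (n m : nat) (A B : R -> pt -> vec) (c : R) (F : R -> pt -> pt).
Hypothesis Hsys : cone_system n m A B c.
Hypothesis Hc : 0 < c.
Hypothesis HF : fundamental n m A B F.

(* by uniqueness of solutions, each F t is linear *)
Lemma fundamental_add p q : inX n m p -> inX n m q ->
  forall t, 0 <= t -> F t (padd p q) = padd (F t p) (F t q).
Proof.
  intros Hp Hq. destruct (HF p Hp) as [E1 S1], (HF q Hq) as [E2 S2].
  destruct (HF (padd p q) (inX_padd _ _ _ _ Hp Hq)) as [E3 S3].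
  apply (sol_unique n m A B c Hsys); auto.
  - apply (sol_add n m A B c Hsys); auto.
  - cbv beta. rewrite E1, E2, E3; auto.
Qed.

Lemma fundamental_scal a p : inX n m p -> forall t, 0 <= t -> F t (pscal a p) = pscal a (F t p).
Proof.
  intros Hp. destruct (HF p Hp) as [E1 S1].
  destruct (HF (pscal a p) (inX_pscal _ _ _ _ Hp)) as [E3 S3].
  apply (sol_unique n m A B c Hsys); auto.
  - apply (sol_scal n m A B c Hsys); auto.
  - cbv beta. rewrite E1, E3; auto.
Qed.

Lemma fundamental_sub p q : inX n m p -> inX n m q ->
  forall t, 0 <= t -> F t (psub p q) = psub (F t p) (F t q).
Proof.
  intros Hp Hq. destruct (HF p Hp) as [E1 S1], (HF q Hq) as [E2 S2].
  destruct (HF (psub p q) (inX_psub _ _ _ _ Hp Hq)) as [E3 S3].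
  apply (sol_unique n m A B c Hsys); auto.
  - apply (sol_sub n m A B c Hsys); auto.
  - cbv beta. rewrite E1, E2, E3; auto.
Qed.

Lemma fundamental_inX v t : inX n m v -> 0 <= t -> inX n m (F t v).
Proof. intros Hv Ht. apply (proj2 (HF v Hv) t Ht). Qed.

(* For every horizon T the fiber over z0 contains a point whose trajectory
   stays in the negative cone up to T: the linear map a |-> a-part of
   F T (a, 0) is injective by cone invariance, hence onto, so the a-part of
   F T (a, z0) can be made zero; then backward invariance applies. *)
Lemma fiber_finite_horizon z0 T : supp m z0 -> 0 <= T ->
  exists a, supp n a /\ neg_upto n m F T (a, z0).
Proof.
  intros Hz0 HT.
  destruct (injective_linear_surjective n (fun a => fst (F T (a, vzero))))
    with (y := vscal (-1) (fst (F T (vzero, z0)))) as [a [Ha Hya]].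
  - intros a Ha. apply (fundamental_inX (a, vzero)); auto using inX_fst.
  - intros a b Ha Hb. rewrite pair_fst_add, fundamental_add; auto using inX_fst.
  - intros k a Ha. rewrite pair_fst_scal, fundamental_scal; auto using inX_fst.
  - intros a Ha Hz i Hi. apply NNPP; intros Hai.
    destruct (HF _ (inX_fst n m a Ha)) as [E0 S].
    assert (Hp : 0 < hcone n m (F 0 (a, vzero))).
    { rewrite E0. unfold hcone. simpl. rewrite nsq_vzero. pose proof (coord_sq_le n a i Hi).
      assert (0 < a i * a i) by (apply Rsqr_pos_lt in Hai; auto). lra. }
    pose proof (cone_invariant n m A B c Hsys Hc _ S Hp T HT) as Inv. cbv beta in Inv.
    unfold hcone in Inv. rewrite (nsq_zero_of n) in Inv by auto.
    pose proof (nsq_nonneg m (snd (F T (a, vzero)))). lra.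
  - apply supp_vscal, (fundamental_inX (vzero, z0)); auto using inX_snd.
  - exists a. split; auto.
    destruct (HF (a, z0)) as [_ S]; [split; auto|].
    intros s Hs. apply (cone_backward n m A B c Hsys Hc _ S T HT); auto.
    unfold hcone. rewrite (nsq_zero_of n).
    + pose proof (nsq_nonneg m (snd (F T (a, z0)))). lra.
    + intros i Hi. rewrite pair_split, fundamental_add; auto using inX_fst, inX_snd.
      simpl. unfold vadd. rewrite Hya by auto. unfold vscal. ring.
Qed.

Lemma fiber_squeeze z0 b1 b2 T : supp m z0 -> supp n b1 -> supp n b2 -> 0 <= T ->
  neg_upto n m F T (b1, z0) -> neg_upto n m F T (b2, z0) ->
  nsq n (vsub b1 b2) * (1 + 2 * c * T) <= 4 * (2 * nsq m z0 + 1).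
Proof.
  intros Hz0 H1 H2 HT N1 N2.
  destruct (HF (b1, z0)) as [E1 S1]; [split; auto|].
  destruct (HF (b2, z0)) as [E2 S2]; [split; auto|].
  pose proof (cone_squeeze n m A B c Hsys Hc _ _ T S1 S2 HT) as Sq.
  cbv beta in Sq. rewrite E1, E2 in Sq. apply Sq; auto.
Qed.

(* A limit of points of the fiber whose trajectories stay in the negative cone
   for longer and longer times stays in the negative cone forever: by the
   growth bound, F s depends continuously on the initial point. *)
Lemma negative_cone_limit z0 (a : nat -> vec) (astar : vec) : supp m z0 -> supp n astar ->
  (forall k, supp n (a k) /\ neg_upto n m F (INR k) (a k, z0)) ->
  (forall i, (i < n)%nat -> Un_cv (fun k => a k i) (astar i)) ->
  forall s, 0 <= s -> hcone n m (F s (astar, z0)) <= 0.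
Proof.
  intros Hz0 Hs Ha Hlim s Hs0.
  destruct (sol_growth n m A B c Hsys s Hs0) as [K [HK Hgrowth]].
  set (E := exp (2 * K * s)). assert (HE : 0 < E) by apply exp_pos.
  set (p := F s (astar, z0)).
  set (d := fun k => psub (F s (a k, z0)) p).
  assert (Ha0 : Un_cv (fun k => nsq n (vsub (a k) astar)) 0).
  { rewrite <- (nsq_self_sub n astar). apply nsq_cv. intros i Hi.
    unfold vsub. apply CV_minus; [apply Hlim; auto | intros e He; exists 0%nat; intros; unfold Rdist;
      rewrite Rminus_diag, Rabs_R0; lra]. }
  assert (Hd : Un_cv (fun k => psq n m (d k)) 0).
  { apply (cv_squeeze_zero _ (fun k => nsq n (vsub (a k) astar) * E)).
    - intros k. split; [apply psq_nonneg|].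
      destruct (Ha k) as [Hak _]. unfold d, p.
      rewrite <- fundamental_sub; [| split; auto | split; auto | lra].
      destruct (HF (psub (a k, z0) (astar, z0))) as [E0 S]; [apply inX_psub; split; auto|].
      pose proof (Hgrowth _ S s ltac:(lra)) as G. cbv beta in G. rewrite E0 in G.
      unfold psq at 2 in G. simpl in G. rewrite nsq_self_sub, Rplus_0_r in G. exact G.
    - replace 0 with (0 * E) by ring. apply CV_mult; auto.
      intros e He; exists 0%nat; intros; unfold Rdist; rewrite Rminus_diag, Rabs_R0; lra. }
  assert (Hfst : Un_cv (fun k => nsq n (fst (F s (a k, z0)))) (nsq n (fst p))).
  { apply nsq_cv, coord_cv_of_nsq. apply (cv_squeeze_zero _ (fun k => psq n m (d k))); [intros k | exact Hd].
    split; [apply nsq_nonneg|]. change (nsq n (fst (d k)) <= psq n m (d k)).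
    pose proof (nsq_nonneg m (snd (d k))). unfold psq. lra. }
  assert (Hsnd : Un_cv (fun k => nsq m (snd (F s (a k, z0)))) (nsq m (snd p))).
  { apply nsq_cv, coord_cv_of_nsq. apply (cv_squeeze_zero _ (fun k => psq n m (d k))); [intros k | exact Hd].
    split; [apply nsq_nonneg|]. change (nsq m (snd (d k)) <= psq n m (d k)).
    pose proof (nsq_nonneg n (fst (d k))). unfold psq. lra. }
  apply (cv_nonpos (fun k => hcone n m (F s (a k, z0)))); [| apply CV_minus; auto].
  destruct (INR_unbounded s) as [N HN]. exists N. intros k Hk.
  apply (proj2 (Ha k)). split; auto. apply Rle_trans with (INR N); [lra | apply le_INR; auto].
Qed.

(* Existence: the points a k good up to horizon k form a Cauchy sequence by
   squeezing, and their limit is good forever. *)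
Lemma fiber_point_exists z0 : supp m z0 ->
  exists astar, supp n astar /\ forall s, 0 <= s -> hcone n m (F s (astar, z0)) <= 0.
Proof.
  intros Hz0.
  assert (Hex : forall k : nat, exists a, supp n a /\ neg_upto n m F (INR k) (a, z0))
    by (intros k; apply fiber_finite_horizon; auto; apply pos_INR).
  set (a := fun k => proj1_sig (constructive_indefinite_description _ (Hex k))).
  assert (Ha : forall k, supp n (a k) /\ neg_upto n m F (INR k) (a k, z0)).
  { intros k. unfold a. destruct constructive_indefinite_description; auto. }
  assert (Hcau : forall i, Cauchy_crit (fun k => a k i)).
  { intros i. destruct (Nat.lt_ge_cases i n) as [Hi|Hi].
    - apply (cauchy_of_sq_bound _ c (4 * (2 * nsq m z0 + 1)) Hc). intros N j k Hj Hk.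
      apply Rle_trans with (nsq n (vsub (a j) (a k)) * (1 + 2 * c * INR N)).
      + apply Rmult_le_compat_r; [pose proof (pos_INR N); nra|].
        apply (coord_sq_le n (vsub (a j) (a k)) i Hi).
      + apply fiber_squeeze; [auto | apply Ha | apply Ha | apply pos_INR | |].
        * apply (neg_upto_mono n m F (INR j)); [apply le_INR; auto | apply Ha].
        * apply (neg_upto_mono n m F (INR k)); [apply le_INR; auto | apply Ha].
    - intros eps Heps. exists 0%nat. intros j k _ _. unfold Rdist.
      rewrite (proj1 (Ha j)), (proj1 (Ha k)), Rminus_0_r, Rabs_R0 by auto. lra. }
  set (astar := fun i => proj1_sig (R_complete _ (Hcau i))).
  assert (Hlim : forall i, Un_cv (fun k => a k i) (astar i)).
  { intros i. unfold astar. destruct R_complete; auto. }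
  assert (Hsa : supp n astar).
  { intros i Hi. apply (UL_sequence (fun k => a k i)); auto.
    intros eps Heps. exists 0%nat. intros k _. unfold Rdist.
    rewrite (proj1 (Ha k)), Rminus_0_r, Rabs_R0 by auto. auto. }
  exists astar. split; auto. apply (negative_cone_limit z0 a); auto.
Qed.

(* Uniqueness: squeezing with arbitrarily large horizons. *)
Lemma fiber_point_unique z0 b1 b2 : supp m z0 -> supp n b1 -> supp n b2 ->
  (forall s, 0 <= s -> hcone n m (F s (b1, z0)) <= 0) ->
  (forall s, 0 <= s -> hcone n m (F s (b2, z0)) <= 0) -> b1 = b2.
Proof.
  intros Hz0 H1 H2 N1 N2.
  set (C := 4 * (2 * nsq m z0 + 1)).
  assert (HC : 0 < C) by (unfold C; pose proof (nsq_nonneg m z0); lra).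
  set (x := nsq n (vsub b1 b2)).
  assert (Hall : forall T, 0 <= T -> x * (1 + 2 * c * T) <= C).
  { intros T HT. apply fiber_squeeze; auto; intros s Hs; [apply N1 | apply N2]; lra. }
  assert (H0 : x = 0).
  { pose proof (nsq_nonneg n (vsub b1 b2)). apply NNPP; intros Hn. fold x in H.
    specialize (Hall (C / (2 * c * x)) ltac:(apply Rlt_le, Rdiv_lt_0_compat; nra)).
    replace (x * (1 + 2 * c * (C / (2 * c * x)))) with (x + C) in Hall by (field; lra). lra. }
  apply (supp_ext n); auto. intros i Hi.
  pose proof (nsq_zero_coord n (vsub b1 b2) H0 i Hi). unfold vsub in H. lra.
Qed.

Theorem fiber_unique_point z0 : supp m z0 ->
  exists! p, (inX n m p /\ forall t, 0 <= t -> hcone n m (F t p) <= 0) /\ (inX n m p /\ snd p = z0).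
Proof.
  intros Hz0. destruct (fiber_point_exists z0 Hz0) as [astar [Hsa Hneg]].
  exists (astar, z0). split; [repeat split; auto|].
  intros [b z] [[[Hb _] Hnb] [_ Hz]]. simpl in Hz. subst z.
  f_equal. apply (fiber_point_unique z0); auto.
Qed.

End Fiber.

(** * The variational equation along a trajectory is a linear cone system *)

Lemma nsq_diff_continuous k (v : R -> vec) t0 :
  (forall i, (i < k)%nat -> forall eps, 0 < eps -> exists del, 0 < del /\
     forall s, 0 <= s -> Rabs (s - t0) < del -> Rabs (v s i - v t0 i) < eps) ->
  forall eps, 0 < eps -> exists del, 0 < del /\
    forall s, 0 <= s -> Rabs (s - t0) < del -> nsq k (vsub (v s) (v t0)) < eps.
Proof.
  induction k; intros H eps Heps.
  - exists 1. split; [lra|]. intros. unfold nsq, dot. simpl. lra.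
  - destruct (IHk (fun i Hi => H i ltac:(lia)) (eps / 2) ltac:(lra)) as [d1 [Hd1 HN1]].
    assert (Hr : 0 < sqrt (eps / 2)) by (apply sqrt_lt_R0; lra).
    destruct (H k ltac:(lia) _ Hr) as [d2 [Hd2 HN2]].
    exists (Rmin d1 d2). split; [apply Rmin_pos; auto|]. intros s Hs Hlt.
    pose proof (Rmin_l d1 d2); pose proof (Rmin_r d1 d2).
    specialize (HN1 s Hs ltac:(lra)). specialize (HN2 s Hs ltac:(lra)).
    unfold nsq, dot in *. simpl. unfold vsub at 3 4.
    pose proof (Rabs_pos (v s k - v t0 k)).
    assert (Rabs (v s k - v t0 k) * Rabs (v s k - v t0 k) < sqrt (eps / 2) * sqrt (eps / 2))
      by (apply Rmult_le_0_lt_compat; auto).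
    rewrite Rabs_mul_self, sqrt_sqrt in H3 by lra. lra.
Qed.

Lemma flow_continuous n m Gam f g phi x t0 : flow_inv n m Gam f g phi -> Gam x -> 0 <= t0 ->
  forall eps, 0 < eps -> exists del, 0 < del /\ forall s, 0 <= s -> Rabs (s - t0) < del ->
    normX n m (psub (phi s x) (phi t0 x)) < eps.
Proof.
  intros Hf Hx Ht0 eps Heps. destruct (Hf x Hx) as [_ Hfl]. destruct (Hfl t0 Ht0) as [_ [Da Dz]].
  destruct (nsq_diff_continuous n (fun s => fst (phi s x)) t0
              (fun i Hi => deriv_nonneg_continuous _ _ _ Ht0 (Da i Hi)) (eps * eps / 2)) as [d1 [Hd1 H1]];
    [nra|].
  destruct (nsq_diff_continuous m (fun s => snd (phi s x)) t0
              (fun i Hi => deriv_nonneg_continuous _ _ _ Ht0 (Dz i Hi)) (eps * eps / 2)) as [d2 [Hd2 H2]];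
    [nra|].
  exists (Rmin d1 d2). split; [apply Rmin_pos; auto|]. intros s Hs Hlt.
  pose proof (Rmin_l d1 d2); pose proof (Rmin_r d1 d2).
  specialize (H1 s Hs ltac:(lra)). specialize (H2 s Hs ltac:(lra)).
  unfold normX. rewrite <- (sqrt_Rsqr eps) by lra. apply sqrt_lt_1_alt. split.
  - pose proof (psq_nonneg n m (psub (phi s x) (phi t0 x))). unfold psq, nsq in *. lra.
  - unfold Rsqr. unfold nsq in *. simpl. lra.
Qed.

Lemma C1_linmap n m k U G DG y : C1_on n m k U G DG -> U y -> linmap n m k (DG y).
Proof. intros [_ [HD _]] Hy. destruct (HD y Hy) as [A1 [A2 [A3 _]]]. split; auto. Qed.

Lemma derivative_bounded_along n m k U Gam f g phi G DG x :
  C1_on n m k U G DG -> (forall y, Gam y -> U y) -> flow_inv n m Gam f g phi -> Gam x ->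
  forall T, 0 <= T -> exists K, 0 < K /\
    forall t, 0 <= t <= T -> forall h, inX n m h -> norm k (DG (phi t x) h) <= K * normX n m h.
Proof.
  intros HC HGU Hfl Hx T HT.
  assert (HU : forall t, 0 <= t -> U (phi t x))
    by (intros t Ht; apply HGU; destruct (Hfl x Hx) as [_ H]; apply (H t Ht)).
  destruct (compact_uniform_bound T
     (fun t K => forall h, inX n m h -> norm k (DG (phi t x) h) <= K * normX n m h) HT) as [K HK].
  - intros t K K' H HKK h Hh. eapply Rle_trans; [apply H; auto|].
    apply Rmult_le_compat_r; auto. apply normX_nonneg.
  - (* near t0, DG (phi t x) is close to the bounded map DG (phi t0 x) *)
    intros t0 Ht0. set (y0 := phi t0 x).
    destruct (linmap_bounded n m k (DG y0) (C1_linmap n m k U G DG y0 HC (HU t0 ltac:(lra))))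
      as [K0 [HK0 Hb0]].
    destruct HC as [_ [_ Hcont]]. destruct (Hcont y0 (HU t0 ltac:(lra)) 1 Rlt_0_1) as [del [Hdel Hc]].
    destruct (flow_continuous n m Gam f g phi x t0 Hfl Hx ltac:(lra) del Hdel) as [eta [Heta Hp]].
    exists eta. split; auto. exists (1 + K0). intros t Ht Htt h Hh.
    assert (Hd : norm k (vsub (DG (phi t x) h) (DG y0 h)) <= 1 * normX n m h)
      by (apply Hc; auto; [apply HU | apply Hp]; lra).
    replace (DG (phi t x) h) with (vadd (vsub (DG (phi t x) h) (DG y0 h)) (DG y0 h))
      by (apply functional_extensionality; intros; unfold vadd, vsub; ring).
    eapply Rle_trans; [apply norm_triangle|]. specialize (Hb0 h Hh). lra.
  - exists (Rmax K 1). split; [pose proof (Rmax_r K 1); lra|].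
    intros t Ht h Hh. eapply Rle_trans; [apply HK; auto|].
    apply Rmult_le_compat_r; [apply normX_nonneg | apply Rmax_l].
Qed.

Lemma expansion_on_cone n m (L : pt -> vec) al r1 a z : linmap n m n L -> supp n a -> supp m z ->
  dot n a (L (a, vzero)) >= al * norm n a ^ 2 ->
  0 <= r1 -> norm n (L (vzero, z)) <= r1 * norm m z ->
  nsq m z <= nsq n a -> (al - r1) * nsq n a <= dot n a (L (a, z)).
Proof.
  intros HL Ha Hz HA Hr1 Hr Hle. rewrite (linmap_split n m n L a z HL Ha Hz), dot_add_r.
  rewrite norm_pow2 in HA.
  pose proof (cauchy_schwarz_low n a (L (vzero, z))).
  pose proof (norm_le_of_nsq n m a z Hle). pose proof (norm_nonneg n a). pose proof (norm_nonneg m z).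
  assert (norm n a * norm n (L (vzero, z)) <= norm n a * (r1 * norm m z)) by (apply Rmult_le_compat_l; auto).
  assert (r1 * (norm n a * norm m z) <= r1 * nsq n a)
    by (apply Rmult_le_compat_l; auto; rewrite <- norm_sq; apply Rmult_le_compat_l; auto).
  nra.
Qed.

Lemma growth_on_cone n m (M : pt -> vec) l r2 a z : linmap n m m M -> supp n a -> supp m z ->
  dot m z (M (vzero, z)) <= l * norm m z ^ 2 ->
  0 <= r2 -> norm m (M (a, vzero)) <= r2 * norm n a ->
  nsq n a <= nsq m z -> dot m z (M (a, z)) <= (l + r2) * nsq m z.
Proof.
  intros HM Ha Hz HB Hr2 Hr Hle. rewrite (linmap_split n m m M a z HM Ha Hz), dot_add_r.
  rewrite norm_pow2 in HB.
  pose proof (cauchy_schwarz_up m z (M (a, vzero))).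
  pose proof (norm_le_of_nsq m n z a Hle). pose proof (norm_nonneg n a). pose proof (norm_nonneg m z).
  assert (norm m z * norm m (M (a, vzero)) <= norm m z * (r2 * norm n a)) by (apply Rmult_le_compat_l; auto).
  assert (r2 * (norm m z * norm n a) <= r2 * nsq m z)
    by (apply Rmult_le_compat_l; auto; rewrite <- norm_sq; apply Rmult_le_compat_l; auto).
  nra.
Qed.

Lemma variational_cone_system n m U Gam f g Df Dg phi x :
  Hyp2 n m U f g Df Dg -> Hyp3 n m U Gam f g phi -> Gam x ->
  exists c, 0 < c /\ cone_system n m (fun t => Df (phi t x)) (fun t => Dg (phi t x)) c.
Proof.
  intros [C1f [C1g [alpha [ell [c1 [_ [_ [Hc1 Hpt]]]]]]]] [HGU [Hfl _]] Hx.
  assert (HU : forall t, 0 <= t -> U (phi t x))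
    by (intros t Ht; apply HGU; destruct (Hfl x Hx) as [_ H]; apply (H t Ht)).
  exists c1. split; auto. split; [|split].
  - intros t Ht. split; eapply C1_linmap; eauto.
  - intros t Ht. set (y := phi t x).
    destruct (Hpt y (HU t Ht)) as [_ [_ [Qa [Qz [r1 [r2 [O1 [O2 Hineq]]]]]]]].
    pose proof (C1_linmap n m n U f Df y C1f (HU t Ht)) as Lf.
    pose proof (C1_linmap n m m U g Dg y C1g (HU t Ht)) as Lg.
    destruct (opnorm_bound m n (fun z' => Df y (vzero, z')) r1 O1) as [Hr1 B1].
    { intros k v Hv. rewrite pair_snd_scal. apply Lf, inX_snd; auto. }
    destruct (opnorm_bound n m (fun a' => Dg y (a', vzero)) r2 O2) as [Hr2 B2].
    { intros k v Hv. rewrite pair_fst_scal. apply Lg, inX_fst; auto. }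
    exists (alpha y - r1), (ell y + r2). split; [lra|]. split; intros a z Ha Hz Hle.
    + apply (expansion_on_cone n m); auto.
    + apply (growth_on_cone n m); auto.
  - intros T HT.
    destruct (derivative_bounded_along n m n U Gam f g phi f Df x C1f HGU Hfl Hx T HT) as [K1 [HK1 Hb1]].
    destruct (derivative_bounded_along n m m U Gam f g phi g Dg x C1g HGU Hfl Hx T HT) as [K2 [HK2 Hb2]].
    exists (Rmax K1 K2). split; [pose proof (Rmax_l K1 K2); lra|].
    intros t Ht h Hh. pose proof (normX_nonneg n m h).
    split; (eapply Rle_trans; [apply Hb1 || apply Hb2; auto|]);
      apply Rmult_le_compat_r; auto; [apply Rmax_l | apply Rmax_r].
Qed.

Theorem lemma2p9 (n m : nat) (U Gam : pt -> Prop) (f g : pt -> vec)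
  (Df Dg : pt -> pt -> vec) (phi : R -> pt -> pt) (Q : R -> pt -> pt -> pt) :
  Hyp1 n m U ->
  Hyp2 n m U f g Df Dg ->
  Hyp3 n m U Gam f g phi ->
  fund_sol n m Gam Df Dg phi Q ->
  forall x, Gam x -> forall zz, supp m zz ->
    exists! p, Tset n m Q x p /\ Ifib n m zz p.
Proof.
  intros _ H2 H3 H4 x Hx zz Hzz.
  destruct (variational_cone_system n m U Gam f g Df Dg phi x H2 H3 Hx) as [c [Hc Hsys]].
  assert (HQ : fundamental n m (fun t => Df (phi t x)) (fun t => Dg (phi t x)) (fun t v => Q t x v)).
  { intros v Hv. destruct (H4 x Hx v Hv) as [E0 Hs]. split; auto. }
  destruct (fiber_unique_point n m _ _ c _ Hsys Hc HQ zz Hzz) as [p [[[Hp Hneg] Hf] Huniq]].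
  exists p. split.
  - split; [split; auto; intros t Ht; rewrite Lyap_zero; auto | exact Hf].
  - intros p' [[Hp' Hneg'] Hf']. apply Huniq. split; [split; auto | exact Hf'].
    intros t Ht. rewrite <- Lyap_zero. auto.
Qed.
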